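(* Let $G\subset \mathrm{Homeo}_+([0,1])$ be a group without linked fixed points and let $\{a,b\}$ be a pair of successive fixed points of $G$. Then: (1) for every $g\in G$, either $g([a,b])=[a,b]$ or $g((a,b))\cap(a,b)=\emptyset$; let $G_{[a,b]}=\{g\in G: g([a,b])=[a,b]\}$ denote the stabilizer of $[a,b]$; (2) there is a group morphism $\tau_{a,b}:G_{[a,b]}\to\mathbb R$ whose kernel is exactly the set of $g\in G_{[a,b]}$ having a fixed point in $(a,b)$, and such that $\tau_{a,b}(g)>0$ if and only if $g(x)-x>0$ on $(a,b)$; this morphism is unique up to multiplication by a positive number; (3) the union $\Lambda_{a,b}$ of the minimal sets of the action of $G_{[a,b]}$ on $(a,b)$ is a non-empty closed subset of $(a,b)$ on which the action of $G_{[a,b]}$ is semi-conjugated to the action of the group of translations $\tau_{a,b}(G_{[a,b]})$ on $\mathbb R$; (4) every element of the kernel of $\tau_{a,b}$ induces the identity map on $\Lambda_{a,b}$.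
   Context: For a group $G$ of homeomorphisms of $[0,1]$, a pair of successive fixed points of $G$ is a pair $\{a,b\}$, $a<b$, such that $(a,b)$ is a connected component of $[0,1]\setminus \mathrm{Fix}(g)$ for some $g\in G$. Two pairs $\{a,b\}$ and $\{c,d\}$ are linked if $(a,b)\cap\{c,d\}$ or $(c,d)\cap\{a,b\}$ consists of exactly one point. $G$ is without linked fixed points if no two pairs of successive fixed points of $G$ are linked. A minimal set of an action on $(a,b)$ is a non-empty closed (in $(a,b)$) invariant set minimal for inclusion. *)

From Stdlib Require Import Reals.
Open Scope R_scope.

(* Homeo_+([0,1]): an increasing homeomorphism of [0,1], encoded as a map R -> R
   that is the identity outside [0,1] (so that group elements are determined by
   their values on [0,1] and composition/inverses are honest functions). *)
Definition homeo01 (f : R -> R) : Prop :=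
  (forall x, (x < 0 \/ 1 < x) -> f x = x) /\
  (forall x y, x < y -> f x < f y) /\
  continuity f /\
  (forall y, exists x, f x = y).

Definition homeo_group (G : (R -> R) -> Prop) : Prop :=
  (forall g, G g -> homeo01 g) /\
  G (fun x => x) /\
  (forall g h, G g -> G h -> G (fun x => g (h x))) /\
  (forall g, G g -> exists h, G h /\ forall x, h (g x) = x /\ g (h x) = x).

Definition component_of_nonfix (g : R -> R) (a b : R) : Prop :=
  0 <= a /\ a < b /\ b <= 1 /\ g a = a /\ g b = b /\
  (forall x, a < x < b -> g x <> x).

Definition succ_fixed (G : (R -> R) -> Prop) (a b : R) : Prop :=
  exists g, G g /\ component_of_nonfix g a b.

Definition exactly_one (P Q : Prop) : Prop := (P /\ ~ Q) \/ (~ P /\ Q).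

Definition linked (a b c d : R) : Prop :=
  exactly_one (a < c < b) (a < d < b) \/ exactly_one (c < a < d) (c < b < d).

Definition without_linked_fixed_points (G : (R -> R) -> Prop) : Prop :=
  forall a b c d, succ_fixed G a b -> succ_fixed G c d -> ~ linked a b c d.

Definition maps_onto_closed (g : R -> R) (a b : R) : Prop :=
  forall y, a <= y <= b <-> exists x, a <= x <= b /\ g x = y.

Definition disjoint_open (g : R -> R) (a b : R) : Prop :=
  forall x, a < x < b -> ~ (a < g x < b).

Definition stab (G : (R -> R) -> Prop) (a b : R) (g : R -> R) : Prop :=
  G g /\ maps_onto_closed g a b.

Definition is_tau (G : (R -> R) -> Prop) (a b : R) (tau : (R -> R) -> R) : Prop :=
  (forall g h, stab G a b g -> stab G a b h ->
     tau (fun x => g (h x)) = tau g + tau h) /\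
  (forall g, stab G a b g -> (tau g = 0 <-> exists x, a < x < b /\ g x = x)) /\
  (forall g, stab G a b g -> (tau g > 0 <-> forall x, a < x < b -> g x - x > 0)).

Definition rel_closed (a b : R) (M : R -> Prop) : Prop :=
  (forall x, M x -> a < x < b) /\
  (forall x, a < x < b ->
     (forall eps, eps > 0 -> exists y, M y /\ Rabs (y - x) < eps) -> M x).

Definition invariant_set (H : (R -> R) -> Prop) (M : R -> Prop) : Prop :=
  forall g, H g -> forall y, M y <-> exists x, M x /\ g x = y.

Definition minimal_set (H : (R -> R) -> Prop) (a b : R) (M : R -> Prop) : Prop :=
  (exists x, M x) /\ rel_closed a b M /\ invariant_set H M /\
  (forall N, (exists x, N x) -> rel_closed a b N -> invariant_set H N ->
     (forall x, N x -> M x) -> forall x, M x -> N x).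

Definition Lambda (G : (R -> R) -> Prop) (a b : R) (x : R) : Prop :=
  exists M, minimal_set (stab G a b) a b M /\ M x.

Definition semi_conjugated (H : (R -> R) -> Prop) (L : R -> Prop)
    (tau : (R -> R) -> R) : Prop :=
  exists phi : R -> R,
    (forall x y, L x -> L y -> x <= y -> phi x <= phi y) /\
    (forall x, L x -> forall eps, eps > 0 -> exists delta, delta > 0 /\
       forall y, L y -> Rabs (y - x) < delta -> Rabs (phi y - phi x) < eps) /\
    (forall g x, H g -> L x -> phi (g x) = phi x + tau g).

(* Two elements of the stabilizer G_[a,b] that fix a point of (a,b) fix a common one: the
   components of their non-fixed sets cannot be linked, so they are nested.  Hence comparing
   g and h on (a,b) (g < h everywhere, or g = h somewhere) is a total bi-invariant Archimedean
   preorder on G_[a,b] in which gh and hg are always equivalent: either there is a least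
   element moving points to the right, and every element equals one of its powers somewhere,
   or every such element can be halved, and a strict commutator inequality contradicts that.
   Hölder's argument then gives tau g = sup {m / n | f^m <= g^n} for a fixed f moving right;
   any other such morphism has the same sign as tau on every g^n f^-m, so it is proportional
   to tau.
   For (1), g maps {a,b} to another pair of successive fixed points, which can neither be
   linked with {a,b} nor lie strictly inside or outside it unless g fixes a and b.
   In the cyclic case Lambda is the fixed-point set of the kernel, a union of discrete orbits,
   and the semi-conjugacy interpolates affinely between the points e^n x0; in the dense case
   Lambda is the set of points in the closure of every orbit, and the semi-conjugacy is
   x |-> sup {tau h | h x0 <= x}. *)

From Stdlib Require Import Reals Lra Lia ClassicalEpsilon Classical FunctionalExtensionality
  PropExtensionality.
Open Scope R_scope.

(** * Fixed points of continuous maps of the line *)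

Lemma continuity_eps (g : R -> R) : continuity g -> forall x eps, eps > 0 ->
  exists delta, delta > 0 /\ forall y, Rabs (y - x) < delta -> Rabs (g y - g x) < eps.
Proof.
  intros Hc x eps He. destruct (Hc x eps He) as [d [Hd Hd']].
  exists d; split; auto. intros y Hy.
  destruct (Req_dec y x) as [->|Hne].
  - unfold Rminus; rewrite Rplus_opp_r, Rabs_R0; lra.
  - apply Hd'. split; [split; [exact I|auto]|exact Hy].
Qed.

Lemma fixed_point_of_limit (g : R -> R) m : continuity g ->
  (forall eps, eps > 0 -> exists x, Rabs (x - m) < eps /\ g x = x) -> g m = m.
Proof.
  intros Hc Happ. apply NNPP. intro Hne.
  set (e := Rabs (g m - m) / 2).
  assert (He : e > 0) by (assert (Rabs (g m - m) > 0) by (apply Rabs_pos_lt; lra); unfold e; lra).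
  destruct (continuity_eps g Hc m e He) as [d [Hd Hcont]].
  destruct (Happ (Rmin d e) ltac:(apply Rmin_pos; lra)) as [x [Hx Hgx]].
  pose proof (Rmin_l d e). pose proof (Rmin_r d e).
  specialize (Hcont x ltac:(lra)). rewrite Hgx, Rabs_minus_sym in Hcont.
  assert (Rabs (g m - m) <= Rabs (g m - x) + Rabs (x - m)).
  { replace (g m - m) with ((g m - x) + (x - m)) by ring. apply Rabs_triang. }
  unfold e in *. lra.
Qed.

Lemma last_fixed_point (g : R -> R) u p : continuity g -> u <= p -> g u = u ->
  exists c, u <= c <= p /\ g c = c /\ forall x, c < x <= p -> g x <> x.
Proof.
  intros Hc Hup Hu.
  set (E := fun x => u <= x <= p /\ g x = x).
  destruct (completeness E) as [c [Hub Hlub]].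
  { exists p; intros x [Hx _]; lra. }
  { exists u; split; [lra|auto]. }
  assert (Huc : u <= c) by (apply Hub; split; [lra|auto]).
  assert (Hcp : c <= p) by (apply Hlub; intros x [Hx _]; lra).
  exists c. split; [lra|]. split.
  - apply fixed_point_of_limit; auto. intros eps He.
    destruct (classic (exists x, E x /\ c - eps < x)) as [[x [[Hx1 Hx2] Hx3]]|Hn].
    + exists x. split; auto. assert (x <= c) by (apply Hub; split; auto).
      rewrite Rabs_left1; lra.
    + exfalso. assert (c <= c - eps); [|lra]. apply Hlub. intros x Hx.
      destruct (Rlt_or_le (c - eps) x); auto. exfalso; apply Hn; eauto.
  - intros x Hx Hgx. assert (x <= c) by (apply Hub; split; [lra|auto]). lra.
Qed.

Lemma first_fixed_point (g : R -> R) p v : continuity g -> p <= v -> g v = v ->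
  exists d, p <= d <= v /\ g d = d /\ forall x, p <= x < d -> g x <> x.
Proof.
  intros Hc Hpv Hv.
  set (g' := fun x => - g (- x)).
  assert (Hc' : continuity g').
  { intro x. apply continuity_pt_opp, (continuity_pt_comp (fun x => - x) g); [|apply Hc].
    apply continuity_pt_opp, derivable_continuous_pt, derivable_pt_id. }
  destruct (last_fixed_point g' (-v) (-p) Hc' ltac:(lra)) as [c [Hc1 [Hc2 Hc3]]].
  { unfold g'. rewrite Ropp_involutive, Hv. ring. }
  exists (-c). split; [lra|]. unfold g' in *. split; [lra|].
  intros x Hx Hgx. apply (Hc3 (-x)); [lra|]. rewrite Ropp_involutive, Hgx. ring.
Qed.

Lemma fixed_point_between (g : R -> R) x y : continuity g -> x <= y ->
  (x <= g x /\ g y <= y) \/ (g x <= x /\ y <= g y) -> exists z, x <= z <= y /\ g z = z.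
Proof.
  intros Hc Hxy Hsign.
  destruct (Req_dec (g x) x). { exists x; split; [lra|auto]. }
  destruct (Req_dec (g y) y). { exists y; split; [lra|auto]. }
  assert (Hcd : continuity (fun t => t - g t))
    by (apply continuity_minus; auto; intro t; apply derivable_continuous_pt, derivable_pt_id).
  assert (x < y) by (destruct (Req_dec x y); [subst; lra|lra]).
  destruct Hsign as [[Hx Hy]|[Hx Hy]].
  - destruct (IVT _ x y Hcd) as [z [Hz1 Hz2]]; try lra. exists z. split; auto. lra.
  - destruct (IVT (fun t => - (t - g t)) x y) as [z [Hz1 Hz2]]; try lra.
    + apply continuity_opp; auto.
    + exists z. split; auto. lra.
Qed.

Lemma Z_crossing (P : Z -> Prop) lo hi : P lo -> ~ P hi -> (lo < hi)%Z ->
  exists n, P n /\ ~ P (n + 1)%Z.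
Proof.
  intros Plo Phi Hlt. replace hi with (lo + Z.of_nat (Z.to_nat (hi - lo)))%Z in Phi by lia.
  clear Hlt. revert Phi. generalize (Z.to_nat (hi - lo)) as k. intro k.
  revert lo Plo. induction k as [|k IH]; intros lo Plo Phi.
  - exfalso. apply Phi. replace (lo + Z.of_nat 0)%Z with lo by lia. auto.
  - destruct (classic (P (lo + 1)%Z)) as [P1|N1]; [|eauto].
    apply (IH (lo + 1)%Z P1). replace (lo + 1 + Z.of_nat k)%Z with (lo + Z.of_nat (S k))%Z by lia.
    auto.
Qed.

Lemma frac_lt m n m' n' : (n > 0)%nat -> (n' > 0)%nat ->
  (m' * Z.of_nat n < m * Z.of_nat n')%Z -> IZR m' / INR n' < IZR m / INR n.
Proof.
  intros Hn Hn' Hz. apply IZR_lt in Hz. rewrite !mult_IZR, <- !INR_IZR_INZ in Hz.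
  assert (0 < INR n) by (apply lt_0_INR; lia).
  assert (0 < INR n') by (apply lt_0_INR; lia).
  apply (Rmult_lt_reg_r (INR n * INR n')); [nra|].
  replace (IZR m' / INR n' * (INR n * INR n')) with (IZR m' * INR n) by (field; lra).
  replace (IZR m / INR n * (INR n * INR n')) with (IZR m * INR n') by (field; lra). lra.
Qed.

Lemma frac_below t n : (n > 0)%nat -> exists m, t - 2 / INR n < IZR m / INR n < t.
Proof.
  intro Hn. assert (0 < INR n) by (apply lt_0_INR; lia).
  destruct (archimed (INR n * t)) as [A B]. exists (up (INR n * t) - 2)%Z.
  rewrite minus_IZR.
  split; apply (Rmult_lt_reg_r (INR n)); auto;
    field_simplify; try lra; rewrite ?Rmult_comm with (r1 := t); lra.
Qed.

Lemma frac_above t n : (n > 0)%nat -> exists m, t < IZR m / INR n < t + 2 / INR n.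
Proof.
  intro Hn. assert (0 < INR n) by (apply lt_0_INR; lia).
  destruct (frac_below t n Hn) as [m Hm]. exists (m + 2)%Z.
  rewrite plus_IZR. replace ((IZR m + 2) / INR n) with (IZR m / INR n + 2 / INR n) by (field; lra).
  lra.
Qed.

Lemma small_inverse_nat eps : eps > 0 -> exists n, (n > 0)%nat /\ 4 / INR n < eps.
Proof.
  intro He. destruct (archimed (4 / eps)) as [A _].
  assert (0 < 4 / eps) by (apply Rdiv_lt_0_compat; lra).
  set (N := up (4 / eps)) in *. assert (HN : (0 < N)%Z) by (apply lt_0_IZR; lra).
  exists (Z.to_nat N). split; [lia|].
  rewrite INR_IZR_INZ. replace (Z.of_nat (Z.to_nat N)) with N by lia.
  apply (Rmult_lt_reg_r (IZR N / eps)); [apply Rdiv_lt_0_compat; lra|].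
  replace (4 / IZR N * (IZR N / eps)) with (4 / eps) by (field; lra).
  replace (eps * (IZR N / eps)) with (IZR N) by (field; lra). lra.
Qed.

Lemma exists_left_strict_point (psi : R -> R) x0 x1 : x0 < x1 -> psi x0 < psi x1 ->
  (forall x y, x0 <= x <= x1 -> x0 <= y <= x1 -> x <= y -> psi x <= psi y) ->
  (forall x eps, x0 <= x <= x1 -> eps > 0 -> exists delta, delta > 0 /\
     forall y, x0 <= y <= x1 -> Rabs (y - x) < delta -> Rabs (psi y - psi x) < eps) ->
  exists y, x0 < y <= x1 /\ forall z, x0 <= z < y -> psi z < psi y.
Proof.
  intros Hx01 Hpsi Hmono Hcont.
  set (E := fun z => x0 <= z <= x1 /\ psi z < psi x1).
  destruct (completeness E) as [y [Hub Hlub]].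
  { exists x1. intros z [Hz _]. lra. }
  { exists x0. split; [lra|auto]. }
  assert (Hx0y : x0 <= y) by (apply Hub; split; [lra|auto]).
  assert (Hyx1 : y <= x1) by (apply Hlub; intros z [Hz _]; lra).
  assert (Hbelow : forall z, x0 <= z < y -> psi z < psi x1).
  { intros z Hz. apply NNPP. intro Hge.
    assert (y <= z); [|lra]. apply Hlub. intros s [Hs Hps]. apply Rnot_lt_le. intro Hzs.
    pose proof (Hmono z s ltac:(lra) Hs ltac:(lra)). lra. }
  assert (Hat : psi x1 <= psi y).
  { apply Rnot_lt_le. intro Hlt.
    assert (y <> x1) by (intros ->; lra).
    destruct (Hcont y (psi x1 - psi y) ltac:(lra) ltac:(lra)) as [d [Hd Hd']].
    set (z := y + Rmin (d / 2) ((x1 - y) / 2)).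
    pose proof (Rmin_l (d / 2) ((x1 - y) / 2)). pose proof (Rmin_r (d / 2) ((x1 - y) / 2)).
    assert (0 < Rmin (d / 2) ((x1 - y) / 2)) by (apply Rmin_pos; lra).
    assert (Ez : E z).
    { split; [unfold z; lra|].
      specialize (Hd' z ltac:(unfold z; lra) ltac:(rewrite Rabs_right; unfold z; lra)).
      pose proof (Hmono y z ltac:(lra) ltac:(unfold z; lra) ltac:(unfold z; lra)).
      rewrite Rabs_right in Hd'; lra. }
    specialize (Hub z Ez). unfold z in Hub. lra. }
  exists y. split.
  - destruct (Req_dec x0 y) as [<-|]; lra.
  - intros z Hz. specialize (Hbelow z Hz). lra.
Qed.

Lemma continuous_glue (psi p1 p2 : R -> R) y d : d > 0 -> p1 y = p2 y ->
  (forall z, y - d < z < y -> psi z = p1 z) -> (forall z, y <= z < y + d -> psi z = p2 z) ->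
  (forall eps, eps > 0 -> exists delta, delta > 0 /\
     forall z, Rabs (z - y) < delta -> Rabs (p1 z - p1 y) < eps) ->
  (forall eps, eps > 0 -> exists delta, delta > 0 /\
     forall z, Rabs (z - y) < delta -> Rabs (p2 z - p2 y) < eps) ->
  forall eps, eps > 0 -> exists delta, delta > 0 /\
     forall z, Rabs (z - y) < delta -> Rabs (psi z - psi y) < eps.
Proof.
  intros Hd E12 Hleft Hright C1 C2 eps He.
  destruct (C1 eps He) as [d1 [Hd1 C1']]. destruct (C2 eps He) as [d2 [Hd2 C2']].
  exists (Rmin d (Rmin d1 d2)). split; [repeat apply Rmin_pos; lra|]. intros z Hz.
  pose proof (Rmin_l d (Rmin d1 d2)). pose proof (Rmin_r d (Rmin d1 d2)).
  pose proof (Rmin_l d1 d2). pose proof (Rmin_r d1 d2).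
  pose proof Hz as Hz'. apply Rabs_def2 in Hz'.
  rewrite (Hright y) by lra.
  destruct (Rlt_or_le z y).
  - rewrite Hleft, <- E12 by lra. apply C1'. lra.
  - rewrite Hright by lra. apply C2'. lra.
Qed.

Lemma not_linked_cases a b c d : a < b -> c < d -> ~ linked a b c d ->
  (d <= a \/ b <= c) \/ (c = a /\ d = b) \/ (a < c /\ d < b) \/ (c < a /\ b < d).
Proof.
  intros Hab Hcd Hl.
  destruct (Rle_or_lt d a); [left; left; auto|].
  destruct (Rle_or_lt b c); [left; right; auto|].
  destruct (Rtotal_order c a) as [H1|[H1|H1]];
  destruct (Rtotal_order d b) as [H2|[H2|H2]];
  try (right; left; split; lra); try (right; right; left; split; lra);
  try (right; right; right; split; lra);
  exfalso; apply Hl; unfold linked, exactly_one;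
  let t := split; solve [split; lra | intros [? ?]; lra] in
  first [left; left; t | left; right; t | right; left; t | right; right; t].
Qed.

Lemma iter_iter {A : Type} (f : A -> A) n k : Nat.iter k (Nat.iter n f) = Nat.iter (n * k) f.
Proof.
  apply functional_extensionality. intro x. induction k as [|k IH]; simpl.
  - rewrite Nat.mul_0_r; auto.
  - rewrite IH. replace (n * S k)%nat with (n + n * k)%nat by lia. rewrite Nat.iter_add; auto.
Qed.

(** * Groups of homeomorphisms of [0,1] *)

Section HomeoGroup.

Variable G : (R -> R) -> Prop.
Hypothesis HG : homeo_group G.

Lemma G_homeo g : G g -> homeo01 g.
Proof. apply HG. Qed.

Lemma G_id : G (fun x => x).
Proof. apply HG. Qed.

Lemma G_comp g h : G g -> G h -> G (fun x => g (h x)).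
Proof. apply HG. Qed.

Lemma G_cont g : G g -> continuity g.
Proof. intro Hg. apply (G_homeo g Hg). Qed.

Lemma G_lt g x y : G g -> (g x < g y <-> x < y).
Proof.
  intro Hg. destruct (G_homeo g Hg) as [_ [Hinc _]]. split; [|apply Hinc].
  intro Hlt. destruct (Rtotal_order x y) as [|[->|Hyx]]; [auto|lra|].
  apply Hinc in Hyx. lra.
Qed.

Lemma G_le g x y : G g -> (g x <= g y <-> x <= y).
Proof.
  intro Hg. pose proof (G_lt g y x Hg) as Hlt.
  split; intro Hle; apply Rnot_lt_le; intro H'; apply Rle_not_lt in Hle; tauto.
Qed.

Lemma G_inj g x y : G g -> g x = g y -> x = y.
Proof.
  intros Hg Hxy. apply Rle_antisym; [apply (G_le g x y Hg)|apply (G_le g y x Hg)]; lra.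
Qed.

Lemma G_fixes_0 g : G g -> g 0 = 0.
Proof.
  intro Hg. destruct (G_homeo g Hg) as [Hout [_ [_ Hsurj]]].
  destruct (Rtotal_order (g 0) 0) as [Hlt|[|Hgt]]; auto.
  - assert (Hgg : g (g 0) = g 0) by (apply Hout; lra).
    apply (G_inj g) in Hgg; auto; lra.
  - destruct (Hsurj (g 0 / 2)) as [z Hz].
    assert (z < 0) by (apply (G_lt g z 0 Hg); lra).
    rewrite Hout in Hz by lra. lra.
Qed.

Lemma G_fixes_1 g : G g -> g 1 = 1.
Proof.
  intro Hg. destruct (G_homeo g Hg) as [Hout [_ [_ Hsurj]]].
  destruct (Rtotal_order (g 1) 1) as [Hlt|[|Hgt]]; auto.
  - destruct (Hsurj ((g 1 + 1) / 2)) as [z Hz].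
    assert (1 < z) by (apply (G_lt g 1 z Hg); lra).
    rewrite Hout in Hz by lra. lra.
  - assert (Hgg : g (g 1) = g 1) by (apply Hout; lra).
    apply (G_inj g) in Hgg; auto; lra.
Qed.

(* Only meaningful when [G g]; otherwise [epsilon] returns an arbitrary map. *)
Definition ginv (g : R -> R) : R -> R :=
  epsilon (inhabits (fun x : R => x))
    (fun h => G h /\ forall x, h (g x) = x /\ g (h x) = x).

Lemma ginv_spec g : G g -> G (ginv g) /\ forall x, ginv g (g x) = x /\ g (ginv g x) = x.
Proof. intro Hg. unfold ginv. apply epsilon_spec. apply HG, Hg. Qed.

Lemma G_inv g : G g -> G (ginv g).
Proof. intro Hg. apply (ginv_spec g Hg). Qed.

Lemma ginv_l g x : G g -> ginv g (g x) = x.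
Proof. intro Hg. apply (ginv_spec g Hg). Qed.

Lemma ginv_r g x : G g -> g (ginv g x) = x.
Proof. intro Hg. apply (ginv_spec g Hg). Qed.

Lemma ginv_ginv g x : G g -> ginv (ginv g) x = g x.
Proof. intro Hg. rewrite <- (ginv_l g x Hg) at 1. apply ginv_l, G_inv, Hg. Qed.

Lemma component_around g u p v : G g -> u < p < v -> g u = u -> g v = v -> g p <> p ->
  exists c d, u <= c < p /\ p < d <= v /\
    g c = c /\ g d = d /\ forall x, c < x < d -> g x <> x.
Proof.
  intros Hg Hp Hu Hv Hgp.
  destruct (last_fixed_point g u p (G_cont g Hg) ltac:(lra) Hu) as [c [Hc1 [Hc2 Hc3]]].
  destruct (first_fixed_point g p v (G_cont g Hg) ltac:(lra) Hv) as [d [Hd1 [Hd2 Hd3]]].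
  assert (c <> p) by congruence. assert (d <> p) by congruence.
  exists c, d. repeat split; auto; try lra.
  intros x Hx. destruct (Rle_or_lt x p); [apply Hc3|apply Hd3]; lra.
Qed.

(** * The stabilizer of a pair of successive fixed points *)

Section SuccessivePair.

Variables a b : R.
Hypothesis Hnl : without_linked_fixed_points G.
Hypothesis Hab : succ_fixed G a b.

Local Notation Gab := (stab G a b).

Lemma pair_bounds : 0 <= a /\ a < b /\ b <= 1.
Proof. destruct Hab as [f [_ [? [? [? _]]]]]. lra. Qed.

Lemma stab_G g : Gab g -> G g.
Proof. intros [Hg _]; exact Hg. Qed.

Lemma stab_fixes_ends g : Gab g -> g a = a /\ g b = b.
Proof.
  intros [Hg Honto]. pose proof pair_bounds.
  destruct (proj1 (Honto a) ltac:(lra)) as [x [Hx Hgx]].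
  destruct (proj1 (Honto b) ltac:(lra)) as [y [Hy Hgy]].
  assert (a <= g a <= b) by (apply Honto; exists a; split; [lra|auto]).
  assert (a <= g b <= b) by (apply Honto; exists b; split; [lra|auto]).
  assert (g a <= g x) by (apply G_le; auto; lra).
  assert (g y <= g b) by (apply G_le; auto; lra).
  split; lra.
Qed.

Lemma stab_of_fixed_ends g : G g -> g a = a -> g b = b -> Gab g.
Proof.
  intros Hg Ha Hb. split; auto. intro y. split.
  - intros Hy. destruct (G_homeo g Hg) as [_ [_ [_ Hsurj]]]. destruct (Hsurj y) as [x <-].
    exists x. rewrite <- Ha, <- Hb in Hy. rewrite !G_le in Hy; auto.
  - intros [x [Hx <-]]. rewrite <- Ha, <- Hb, !G_le; auto.
Qed.

Lemma stab_inside g x : Gab g -> a < x < b -> a < g x < b.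
Proof.
  intros Hstab Hx. destruct (stab_fixes_ends g Hstab) as [Ha Hb].
  rewrite <- Ha at 1. rewrite <- Hb. rewrite !G_lt; auto; apply stab_G; auto.
Qed.

Lemma stab_id : Gab (fun x => x).
Proof. apply stab_of_fixed_ends; auto. apply G_id. Qed.

Lemma stab_comp g h : Gab g -> Gab h -> Gab (fun x => g (h x)).
Proof.
  intros Hg Hh. destruct (stab_fixes_ends g Hg), (stab_fixes_ends h Hh).
  apply stab_of_fixed_ends; [apply G_comp; apply stab_G; auto| |]; congruence.
Qed.

Lemma stab_inv g : Gab g -> Gab (ginv g).
Proof.
  intros Hg. destruct (stab_fixes_ends g Hg) as [Ha Hb]. pose proof (stab_G g Hg).
  apply stab_of_fixed_ends; [apply G_inv; auto| |].
  - rewrite <- Ha at 1. apply ginv_l; auto.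
  - rewrite <- Hb at 1. apply ginv_l; auto.
Qed.

Lemma succ_fixed_cases c d e f : succ_fixed G c d -> succ_fixed G e f ->
  (f <= c \/ d <= e) \/ (e = c /\ f = d) \/ (c < e /\ f < d) \/ (e < c /\ d < f).
Proof.
  intros H1 H2. apply not_linked_cases; [| |apply Hnl; auto].
  - destruct H1 as [? [_ [_ [? _]]]]; auto.
  - destruct H2 as [? [_ [_ [? _]]]]; auto.
Qed.

(* The component of [0,1] \ Fix(g) containing a would otherwise be linked with (a,b). *)
Lemma not_into_interior g : G g -> a < g a -> g b < b -> False.
Proof.
  intros Hg Ha Hb. pose proof pair_bounds.
  assert (0 < a) by (destruct (Req_dec a 0) as [->|]; [rewrite G_fixes_0 in Ha; auto; lra|lra]).
  destruct (component_around g 0 a 1 Hg) as [c [d [Hc [Hd [Hgc [Hgd Hno]]]]]];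
    try lra; [apply G_fixes_0; auto|apply G_fixes_1; auto|].
  assert (d < b).
  { apply Rnot_le_lt. intro Hdb. assert (d <> b) by (intros ->; lra).
    destruct (fixed_point_between g a b (G_cont g Hg)) as [z [Hz Hgz]]; try lra.
    apply (Hno z); auto. lra. }
  assert (Hcd : succ_fixed G c d) by (exists g; repeat split; auto; lra).
  destruct (succ_fixed_cases a b c d Hab Hcd) as [[?|?]|[[? ?]|[[? ?]|[? ?]]]]; lra.
Qed.

Lemma conj_succ_fixed g : G g -> succ_fixed G (g a) (g b).
Proof.
  intro Hg. pose proof pair_bounds.
  destruct Hab as [f [Hf [_ [_ [_ [Hfa [Hfb Hfno]]]]]]].
  exists (fun x => g (f (ginv g x))). split; [apply G_comp, G_comp, G_inv; auto|].
  repeat split.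
  - rewrite <- (G_fixes_0 g Hg). apply G_le; auto; lra.
  - apply G_lt; auto; lra.
  - rewrite <- (G_fixes_1 g Hg). apply G_le; auto; lra.
  - rewrite ginv_l, Hfa; auto.
  - rewrite ginv_l, Hfb; auto.
  - intros x Hx Hfix. apply (Hfno (ginv g x)).
    + rewrite <- (G_lt g _ _ Hg), <- (G_lt g (ginv g x) _ Hg), ginv_r; auto.
    + apply (G_inj g); auto. rewrite ginv_r; auto.
Qed.

Lemma maps_onto_or_disjoint g : G g -> maps_onto_closed g a b \/ disjoint_open g a b.
Proof.
  intro Hg. pose proof pair_bounds.
  destruct (classic (g a = a /\ g b = b)) as [[Ha Hb]|Hmoved].
  { left. apply (stab_of_fixed_ends g Hg Ha Hb). }
  assert (g a < g b) by (apply G_lt; auto; lra).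
  destruct (succ_fixed_cases a b (g a) (g b) Hab (conj_succ_fixed g Hg))
    as [[Hd|Hd]|[[H1 H2]|[[H1 H2]|[H1 H2]]]].
  - right. intros x Hx Hgx. assert (g x < g b) by (apply G_lt; auto; lra). lra.
  - right. intros x Hx Hgx. assert (g a < g x) by (apply G_lt; auto; lra). lra.
  - exfalso; apply Hmoved; split; auto.
  - exfalso. apply (not_into_interior g); auto.
  - exfalso. apply (not_into_interior (ginv g)); [apply G_inv; auto| |];
      rewrite <- (G_lt g _ _ Hg), ginv_r; auto.
Qed.

#[local] Hint Resolve stab_id stab_comp stab_inv stab_G : core.

Definition moves_right (g : R -> R) : Prop := forall x, a < x < b -> x < g x.
Definition moves_left (g : R -> R) : Prop := forall x, a < x < b -> g x < x.
Definition fixes_some (g : R -> R) : Prop := exists x, a < x < b /\ g x = x.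

Definition midpoint : R := (a + b) / 2.

Lemma midpoint_inside : a < midpoint < b.
Proof. pose proof pair_bounds. unfold midpoint. lra. Qed.

#[local] Hint Resolve midpoint_inside : core.

Lemma stab_trichotomy g : Gab g -> fixes_some g \/ moves_right g \/ moves_left g.
Proof.
  intro Hg. destruct (classic (fixes_some g)) as [|Hnofix]; [left; auto|right].
  pose proof (G_cont g (stab_G g Hg)) as Hc. pose proof midpoint_inside as Hm.
  set (m := midpoint) in *.
  assert (Hnf : forall z, a < z < b -> g z <> z) by (intros z Hz Hgz; apply Hnofix; exists z; auto).
  assert (Hsame : forall x, a < x < b -> (x < g x <-> m < g m)).
  { intros x Hx. split; intro Hlt; apply Rnot_le_lt; intro Hle; destruct (Rle_or_lt x m);
      [destruct (fixed_point_between g x m Hc) as [z [Hz Hgz]]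
      |destruct (fixed_point_between g m x Hc) as [z [Hz Hgz]]
      |destruct (fixed_point_between g x m Hc) as [z [Hz Hgz]]
      |destruct (fixed_point_between g m x Hc) as [z [Hz Hgz]]]; try lra;
      apply (Hnf z); auto; lra. }
  destruct (Rlt_or_le m (g m)) as [Hlt|Hle].
  - left. intros x Hx. apply Hsame; auto.
  - right. intros x Hx. assert (g x <> x) by (apply Hnf; auto).
    assert (~ x < g x) by (rewrite Hsame; lra). lra.
Qed.

(* The component is not linked with [(a,b)] and avoids the fixed point q, so it lies inside. *)
Lemma component_inside g p : Gab g -> fixes_some g -> a < p < b -> g p <> p ->
  exists c d, a < c < p /\ p < d < b /\ component_of_nonfix g c d.
Proof.
  intros Hg [q [Hq Hgq]] Hp Hgp. pose proof pair_bounds. destruct (stab_fixes_ends g Hg).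
  destruct (component_around g a p b) as [c [d [Hc [Hd [Hgc [Hgd Hno]]]]]]; auto.
  assert (Hcomp : component_of_nonfix g c d) by (repeat split; auto; lra).
  assert (Hs : succ_fixed G c d) by (exists g; auto).
  destruct (succ_fixed_cases a b c d Hab Hs) as [[?|?]|[[? ?]|[[? ?]|[? ?]]]]; try lra.
  - subst. exfalso. apply (Hno q); auto.
  - exists c, d. repeat split; auto; lra.
Qed.

(* Two components of the non-fixed sets can't be linked, so they are nested; the inner one
   contains a fixed point of the other map. *)
Lemma common_fixed_point g1 g2 : Gab g1 -> Gab g2 -> fixes_some g1 -> fixes_some g2 ->
  exists p, a < p < b /\ g1 p = p /\ g2 p = p.
Proof.
  intros H1 H2 K1 K2. pose proof K2 as [p [Hp Hgp]].
  destruct (Req_dec (g1 p) p) as [|Hp1]. { exists p; auto. }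
  destruct (component_inside g1 p H1 K1 Hp Hp1) as [c [d [Hc [Hd Hcd]]]].
  pose proof Hcd as [_ [_ [_ [Hgc _]]]].
  destruct (Req_dec (g2 c) c) as [|Hc2]. { exists c. repeat split; auto; lra. }
  destruct (component_inside g2 c H2 K2 ltac:(lra) Hc2) as [e [f [He [Hf Hef]]]].
  assert (S1 : succ_fixed G c d) by (exists g1; auto).
  assert (S2 : succ_fixed G e f) by (exists g2; auto).
  destruct Hef as [_ [_ [_ [_ [_ Hno2]]]]].
  destruct (succ_fixed_cases c d e f S1 S2) as [[?|?]|[[? ?]|[[? ?]|[? ?]]]]; try lra.
  exfalso. apply (Hno2 p); auto. lra.
Qed.

Lemma fixes_some_comp g1 g2 : Gab g1 -> Gab g2 -> fixes_some g1 -> fixes_some g2 ->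
  fixes_some (fun x => g1 (g2 x)).
Proof.
  intros. destruct (common_fixed_point g1 g2) as [p [Hp [E1 E2]]]; auto.
  exists p. split; auto. rewrite E2; auto.
Qed.

Lemma fixes_some_inv g : Gab g -> fixes_some g -> fixes_some (ginv g).
Proof. intros Hg [p [Hp E]]. exists p. split; auto. rewrite <- E at 1. apply ginv_l; auto. Qed.

Lemma moves_left_inv g : Gab g -> moves_left g -> moves_right (ginv g).
Proof.
  intros Hg Hl x Hx. pose proof (Hl (ginv g x) (stab_inside _ x (stab_inv g Hg) Hx)) as Hlt.
  rewrite ginv_r in Hlt; auto.
Qed.

Lemma moves_right_inv g : Gab g -> moves_right g -> moves_left (ginv g).
Proof.
  intros Hg Hr x Hx. pose proof (Hr (ginv g x) (stab_inside _ x (stab_inv g Hg) Hx)) as Hlt.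
  rewrite ginv_r in Hlt; auto.
Qed.

Lemma exists_moves_right : exists f, Gab f /\ moves_right f.
Proof.
  destruct Hab as [f [Gf [_ [_ [_ [Ha [Hb Hno]]]]]]].
  assert (Hf : Gab f) by (apply stab_of_fixed_ends; auto).
  destruct (stab_trichotomy f Hf) as [[p [Hp E]]|[Hr|Hl]].
  - exfalso. apply (Hno p); auto.
  - exists f; auto.
  - exists (ginv f). split; auto. apply moves_left_inv; auto.
Qed.

(* The order of G_[a,b] seen on (a,b); by [order_trichotomy], [le_at] is the non-strict
   version of [lt_on]. *)
Definition lt_on (u v : R -> R) : Prop := forall x, a < x < b -> u x < v x.
Definition le_at (u v : R -> R) : Prop := exists x, a < x < b /\ u x <= v x.
Definition eq_at (u v : R -> R) : Prop := exists x, a < x < b /\ u x = v x.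

Lemma order_trichotomy u v : Gab u -> Gab v -> lt_on u v \/ eq_at u v \/ lt_on v u.
Proof.
  intros Hu Hv. pose proof (stab_G v Hv) as Gv.
  destruct (stab_trichotomy (fun x => ginv v (u x))) as [[p [Hp E]]|[Hr|Hl]]; auto.
  - right; left. exists p. split; auto. rewrite <- E at 2. rewrite ginv_r; auto.
  - right; right. intros x Hx. specialize (Hr x Hx). rewrite <- (G_lt v), ginv_r in Hr; auto.
  - left. intros x Hx. specialize (Hl x Hx). rewrite <- (G_lt v), ginv_r in Hl; auto.
Qed.

Lemma eq_at_trans u v w : Gab u -> Gab v -> Gab w -> eq_at u v -> eq_at v w -> eq_at u w.
Proof.
  intros Hu Hv Hw [p [Hp E1]] [q [Hq E2]]. pose proof (stab_G v Hv) as Gv.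
  destruct (common_fixed_point (fun x => ginv v (u x)) (fun x => ginv v (w x)))
    as [r [Hr [R1 R2]]]; auto.
  - exists p. split; auto. rewrite E1. apply ginv_l; auto.
  - exists q. split; auto. rewrite <- E2. apply ginv_l; auto.
  - exists r. split; auto. apply (G_inj (ginv v)); [apply G_inv; auto|congruence].
Qed.

Lemma eq_at_sym u v : eq_at u v -> eq_at v u.
Proof. intros [p [Hp E]]; exists p; auto. Qed.

Lemma eq_at_refl u : eq_at u u.
Proof. exists midpoint. auto. Qed.

Lemma lt_on_trans u v w : lt_on u v -> lt_on v w -> lt_on u w.
Proof. intros L1 L2 x Hx. specialize (L1 x Hx); specialize (L2 x Hx); lra. Qed.

Lemma lt_on_le_at u v : lt_on u v -> le_at u v.
Proof. intros L. exists midpoint. split; auto. left; auto. Qed.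

Lemma eq_at_le_at u v : eq_at u v -> le_at u v.
Proof. intros [p [Hp E]]. exists p; split; auto; lra. Qed.

Lemma lt_on_not_eq_at u v : lt_on u v -> eq_at u v -> False.
Proof. intros L [p [Hp E]]. specialize (L p Hp). lra. Qed.

Lemma le_at_not_lt_on u v : le_at u v -> lt_on v u -> False.
Proof. intros [p [Hp E]] L. specialize (L p Hp). lra. Qed.

Lemma not_lt_on_le_at u v : Gab u -> Gab v -> ~ lt_on v u -> le_at u v.
Proof.
  intros Hu Hv N. destruct (order_trichotomy u v Hu Hv) as [L|[E|L]].
  - apply lt_on_le_at; auto.
  - apply eq_at_le_at; auto.
  - contradiction.
Qed.

Lemma not_le_at_lt_on u v : Gab u -> Gab v -> ~ le_at u v -> lt_on v u.
Proof.
  intros Hu Hv N. destruct (order_trichotomy v u Hv Hu) as [L|[E|L]]; auto; exfalso; apply N.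
  - apply eq_at_le_at, eq_at_sym; auto.
  - apply lt_on_le_at; auto.
Qed.

Lemma le_at_lt_on_trans u v w : Gab u -> Gab v -> Gab w -> le_at u v -> lt_on v w -> lt_on u w.
Proof.
  intros Hu Hv Hw L1 L2. destruct (order_trichotomy u w Hu Hw) as [L|[E|L]]; auto; exfalso.
  - destruct (order_trichotomy u v Hu Hv) as [L'|[E'|L']].
    + apply (lt_on_not_eq_at u w); [apply (lt_on_trans _ v)|]; auto.
    + apply (lt_on_not_eq_at v w); auto. apply (eq_at_trans v u w); auto. apply eq_at_sym; auto.
    + apply (le_at_not_lt_on u v); auto.
  - apply (le_at_not_lt_on u v); auto. apply (lt_on_trans _ w); auto.
Qed.

Lemma lt_on_le_at_trans u v w : Gab u -> Gab v -> Gab w -> lt_on u v -> le_at v w -> lt_on u w.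
Proof.
  intros Hu Hv Hw L1 L2. destruct (order_trichotomy u w Hu Hw) as [L|[E|L]]; auto; exfalso.
  - destruct (order_trichotomy v w Hv Hw) as [L'|[E'|L']].
    + apply (lt_on_not_eq_at u w); [apply (lt_on_trans _ v)|]; auto.
    + apply (lt_on_not_eq_at u v); auto. apply (eq_at_trans u w v); auto. apply eq_at_sym; auto.
    + apply (le_at_not_lt_on v w); auto.
  - apply (le_at_not_lt_on v w); auto. apply (lt_on_trans _ u); auto.
Qed.

Lemma le_at_trans u v w : Gab u -> Gab v -> Gab w -> le_at u v -> le_at v w -> le_at u w.
Proof.
  intros Hu Hv Hw L1 L2. apply not_lt_on_le_at; auto. intro L.
  apply (le_at_not_lt_on u v); auto. apply (le_at_lt_on_trans v w u); auto.
Qed.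

Lemma lt_on_postcomp k u v : G k -> lt_on u v -> lt_on (fun x => k (u x)) (fun x => k (v x)).
Proof. intros Gk L x Hx. apply G_lt; auto. Qed.

Lemma lt_on_precomp k u v : Gab k -> lt_on u v -> lt_on (fun x => u (k x)) (fun x => v (k x)).
Proof. intros Hk L x Hx. apply L, stab_inside; auto. Qed.

Lemma le_at_postcomp k u v : G k -> le_at u v -> le_at (fun x => k (u x)) (fun x => k (v x)).
Proof. intros Gk [p [Hp E]]. exists p. split; auto. apply G_le; auto. Qed.

Lemma le_at_precomp k u v : Gab k -> le_at u v -> le_at (fun x => u (k x)) (fun x => v (k x)).
Proof.
  intros Hk [p [Hp E]]. exists (ginv k p). split; [apply stab_inside; auto|].
  rewrite ginv_r; auto.
Qed.

Lemma eq_at_postcomp k u v : eq_at u v -> eq_at (fun x => k (u x)) (fun x => k (v x)).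
Proof. intros [p [Hp E]]. exists p. split; auto. rewrite E; auto. Qed.

Lemma eq_at_precomp k u v : Gab k -> eq_at u v -> eq_at (fun x => u (k x)) (fun x => v (k x)).
Proof.
  intros Hk [p [Hp E]]. exists (ginv k p). split; [apply stab_inside; auto|].
  rewrite ginv_r; auto.
Qed.

Lemma le_at_comp u v u' v' : Gab u -> Gab v -> Gab u' -> Gab v' -> le_at u v -> le_at u' v' ->
  le_at (fun x => u (u' x)) (fun x => v (v' x)).
Proof.
  intros. apply (le_at_trans _ (fun x => v (u' x))); auto.
  - apply le_at_precomp; auto.
  - apply le_at_postcomp; auto.
Qed.

Lemma lt_on_comp u v u' v' : Gab u -> Gab v' -> lt_on u v -> lt_on u' v' ->
  lt_on (fun x => u (u' x)) (fun x => v (v' x)).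
Proof.
  intros Hu Hv' L1 L2 x Hx. apply (Rlt_trans _ (u (v' x))).
  - apply G_lt; auto.
  - apply L1, stab_inside; auto.
Qed.

Lemma eq_at_comp u v u' v' : Gab u -> Gab v -> Gab u' -> Gab v' -> eq_at u v -> eq_at u' v' ->
  eq_at (fun x => u (u' x)) (fun x => v (v' x)).
Proof.
  intros. apply (eq_at_trans _ (fun x => v (u' x))); auto.
  - apply eq_at_precomp; auto.
  - apply eq_at_postcomp; auto.
Qed.

Lemma le_at_ext u u' v v' : (forall x, u x = u' x) -> (forall x, v x = v' x) ->
  le_at u v -> le_at u' v'.
Proof. intros E1 E2 [p [Hp L]]. exists p. rewrite <- E1, <- E2. auto. Qed.

Lemma lt_on_ext u u' v v' : (forall x, u x = u' x) -> (forall x, v x = v' x) ->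
  lt_on u v -> lt_on u' v'.
Proof. intros E1 E2 L x Hx. rewrite <- E1, <- E2. auto. Qed.

Lemma eq_at_ext u u' v v' : (forall x, u x = u' x) -> (forall x, v x = v' x) ->
  eq_at u v -> eq_at u' v'.
Proof. intros E1 E2 [p [Hp L]]. exists p. rewrite <- E1, <- E2. auto. Qed.

Lemma stab_iter u n : Gab u -> Gab (Nat.iter n u).
Proof.
  intro Hu. induction n as [|n IH]; [apply stab_id|].
  change (Gab (fun x => u (Nat.iter n u x))). auto.
Qed.

#[local] Hint Resolve stab_iter : core.

Lemma iter_moves_right u n : Gab u -> moves_right u -> (n > 0)%nat -> moves_right (Nat.iter n u).
Proof.
  intros Hu Pu Hn x Hx. induction n as [|n IH]; [lia|]. simpl.
  assert (Hin : a < Nat.iter n u x < b) by (apply stab_inside; auto).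
  specialize (Pu _ Hin). destruct n; simpl in *; [lra|]. specialize (IH ltac:(lia)). lra.
Qed.

(* The orbit of x would otherwise increase to a fixed point of u inside (a,b). *)
Lemma iter_unbounded u x y : Gab u -> moves_right u -> a < x < b -> a < y < b ->
  exists n, y < Nat.iter n u x.
Proof.
  intros Hu Pu Hx Hy. apply NNPP. intro Hn.
  assert (Hbd : forall n, Nat.iter n u x <= y) by (intro n; apply Rnot_lt_le; eauto).
  set (E := fun z => exists n, z = Nat.iter n u x).
  destruct (completeness E) as [L [Hub Hlub]].
  { exists y. intros z [n ->]. auto. }
  { exists x, O. auto. }
  assert (x <= L) by (apply Hub; exists O; auto).
  assert (L <= y) by (apply Hlub; intros z [n ->]; auto).
  pose proof (Pu L ltac:(lra)) as HL.
  destruct (continuity_eps u (G_cont u (stab_G u Hu)) L (u L - L) ltac:(lra)) as [d [Hd Hcont]].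
  destruct (classic (exists n, L - d < Nat.iter n u x)) as [[n Hn']|Hno].
  - assert (Nat.iter n u x <= L) by (apply Hub; exists n; auto).
    assert (u (Nat.iter n u x) <= L) by (apply Hub; exists (S n); auto).
    specialize (Hcont (Nat.iter n u x) ltac:(rewrite Rabs_left1; lra)).
    assert (u (Nat.iter n u x) <= u L) by (apply G_le; auto).
    rewrite Rabs_left1 in Hcont; lra.
  - assert (L <= L - d); [|lra]. apply Hlub. intros z [n ->].
    apply Rnot_lt_le. eauto.
Qed.

Definition zpow (u : R -> R) (m : Z) : R -> R :=
  if (0 <=? m)%Z then Nat.iter (Z.to_nat m) u else Nat.iter (Z.to_nat (- m)) (ginv u).

Lemma stab_zpow u m : Gab u -> Gab (zpow u m).
Proof. intro Hu. unfold zpow. destruct (0 <=? m)%Z; auto. Qed.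

#[local] Hint Resolve stab_zpow : core.

Lemma zpow_of_nat u n : zpow u (Z.of_nat n) = Nat.iter n u.
Proof.
  unfold zpow. replace (0 <=? Z.of_nat n)%Z with true by (symmetry; apply Z.leb_le; lia).
  replace (Z.to_nat (Z.of_nat n)) with n by lia. auto.
Qed.

Lemma zpow_succ u m x : G u -> zpow u (m + 1) x = u (zpow u m x).
Proof.
  intro Gu. unfold zpow. destruct (Z.le_gt_cases 0 m).
  - replace (0 <=? m + 1)%Z with true by (symmetry; apply Z.leb_le; lia).
    replace (0 <=? m)%Z with true by (symmetry; apply Z.leb_le; lia).
    replace (Z.to_nat (m + 1)) with (S (Z.to_nat m)) by lia. reflexivity.
  - replace (0 <=? m)%Z with false by (symmetry; apply Z.leb_gt; lia).
    replace (Z.to_nat (- m)) with (S (Z.to_nat (- (m + 1)))) by lia. simpl.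
    rewrite ginv_r; auto.
    destruct (Z.eq_dec m (-1)) as [->|Hm]; [reflexivity|].
    replace (0 <=? m + 1)%Z with false by (symmetry; apply Z.leb_gt; lia). reflexivity.
Qed.

Lemma zpow_pred u m x : G u -> zpow u (m - 1) x = ginv u (zpow u m x).
Proof.
  intro Gu. replace m with ((m - 1) + 1)%Z at 2 by lia. rewrite zpow_succ, ginv_l; auto.
Qed.

Lemma zpow_add u m m' x : G u -> zpow u (m + m') x = zpow u m (zpow u m' x).
Proof.
  intro Gu. revert x. induction m using Z.peano_ind; intro x; [reflexivity| |].
  - replace (Z.succ m + m')%Z with ((m + m') + 1)%Z by lia.
    rewrite zpow_succ, IHm, <- Z.add_1_r, zpow_succ; auto.
  - replace (Z.pred m + m')%Z with ((m + m') - 1)%Z by lia.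
    rewrite zpow_pred, IHm, <- Z.sub_1_r, zpow_pred; auto.
Qed.

Lemma zpow_opp u m x : G u -> zpow u (- m) (zpow u m x) = x.
Proof. intro Gu. rewrite <- zpow_add; auto. replace (- m + m)%Z with 0%Z by lia. auto. Qed.

Lemma iter_zpow u m k : G u -> Nat.iter k (zpow u m) = zpow u (m * Z.of_nat k).
Proof.
  intro Gu. apply functional_extensionality. intro x. induction k as [|k IH]; simpl.
  - rewrite Z.mul_0_r. auto.
  - rewrite IH, <- zpow_add by auto. f_equal. lia.
Qed.

Lemma zpow_lt_on u m m' : Gab u -> moves_right u -> (m < m')%Z -> lt_on (zpow u m) (zpow u m').
Proof.
  intros Hu Pu Hm x Hx. replace m' with (m + (m' - m))%Z by lia.
  rewrite zpow_add by auto. apply G_lt; auto.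
  replace (m' - m)%Z with (Z.of_nat (Z.to_nat (m' - m))) by lia. rewrite zpow_of_nat.
  apply iter_moves_right; auto. lia.
Qed.

Lemma zpow_le u m m' x : Gab u -> moves_right u -> (m <= m')%Z -> a < x < b ->
  zpow u m x <= zpow u m' x.
Proof.
  intros Hu Pu Hm Hx. destruct (Z.eq_dec m m') as [->|]; [lra|].
  left. apply zpow_lt_on; auto. lia.
Qed.

Lemma zpow_lt_on_inv u m m' : Gab u -> moves_right u -> lt_on (zpow u m) (zpow u m') ->
  (m < m')%Z.
Proof.
  intros Hu Pu L. apply Z.nle_gt. intro Hle.
  pose proof (L midpoint midpoint_inside).
  pose proof (zpow_le u m' m midpoint Hu Pu Hle midpoint_inside). lra.
Qed.

Lemma zpow_above u x y : Gab u -> moves_right u -> a < x < b -> a < y < b ->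
  exists m, y < zpow u m x.
Proof.
  intros. destruct (iter_unbounded u x y) as [n Hn]; auto.
  exists (Z.of_nat n). rewrite zpow_of_nat; auto.
Qed.

Lemma zpow_below u x y : Gab u -> moves_right u -> a < x < b -> a < y < b ->
  exists m, zpow u m x < y.
Proof.
  intros Hu Pu Hx Hy. destruct (iter_unbounded u y x) as [n Hn]; auto.
  exists (- Z.of_nat n)%Z. rewrite <- (G_lt (zpow u (Z.of_nat n))), <- zpow_add by auto.
  replace (Z.of_nat n + - Z.of_nat n)%Z with 0%Z by lia. rewrite zpow_of_nat. auto.
Qed.

Lemma zpow_floor u x0 y : Gab u -> moves_right u -> a < x0 < b -> a < y < b ->
  exists n, zpow u n x0 <= y < zpow u (n + 1) x0.
Proof.
  intros Hu Pu Hx0 Hy.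
  destruct (zpow_below u x0 y) as [lo Hlo]; auto.
  destruct (zpow_above u x0 y) as [hi Hhi]; auto.
  assert (lo < hi)%Z.
  { apply Z.nle_gt. intro Hle. pose proof (zpow_le u hi lo x0 Hu Pu Hle Hx0). lra. }
  destruct (Z_crossing (fun n => zpow u n x0 <= y) lo hi) as [n [Pn Nn]]; try lra; auto.
  exists n. lra.
Qed.

Lemma zpow_bracket u g : Gab u -> moves_right u -> Gab g ->
  exists n, le_at (zpow u n) g /\ lt_on g (zpow u (n + 1)).
Proof.
  intros Hu Pu Hg. pose proof midpoint_inside as I0. set (x0 := midpoint) in *.
  assert (Ig : a < g x0 < b) by (apply stab_inside; auto).
  destruct (zpow_below u x0 (g x0)) as [lo Hlo]; auto.
  destruct (zpow_above u x0 (g x0)) as [m Hm]; auto.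
  assert (Lm : lt_on g (zpow u (m + 1))).
  { apply (le_at_lt_on_trans _ (zpow u m)); auto.
    - exists x0. split; auto. lra.
    - apply zpow_lt_on; auto. lia. }
  set (P := fun n => le_at (zpow u n) g).
  assert (Plo : P lo) by (exists x0; split; auto; lra).
  assert (Nhi : ~ P (m + 1)%Z) by (intro L; apply (le_at_not_lt_on _ _ L Lm)).
  assert (Hlt : (lo < m + 1)%Z).
  { apply Z.nle_gt. intro Hle. apply Nhi.
    apply (le_at_trans _ (zpow u lo)); auto.
    exists x0. split; auto. apply zpow_le; auto. }
  destruct (Z_crossing P lo (m + 1)%Z Plo Nhi Hlt) as [n [Pn Nn]].
  exists n. split; auto. apply not_le_at_lt_on; auto.
Qed.

Definition least_moving_right (e : R -> R) : Prop :=
  Gab e /\ moves_right e /\ forall p, Gab p -> moves_right p -> le_at e p.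

Lemma eq_at_zpow_least e g : least_moving_right e -> Gab g -> exists n, eq_at g (zpow e n).
Proof.
  intros [He [Pe Le]] Hg.
  destruct (zpow_bracket e g He Pe Hg) as [n [L1 L2]]. exists n.
  set (z := zpow e n). assert (Hz : Gab z) by (apply stab_zpow; auto).
  set (r := fun x => ginv z (g x)).
  assert (Hr : Gab r) by (unfold r; auto).
  assert (R1 : le_at (fun x => x) r).
  { apply (le_at_ext (fun x => ginv z (z x)) _ r r); [intro; apply ginv_l; auto|reflexivity|].
    unfold r. apply le_at_postcomp; auto. }
  assert (R2 : lt_on r e).
  { apply (lt_on_ext r r (fun x => ginv z (zpow e (n + 1) x)) e); [reflexivity| |].
    - intro x. rewrite zpow_add by auto. apply ginv_l; auto.
    - unfold r. apply lt_on_postcomp; auto. }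
  destruct (stab_trichotomy r Hr) as [[p [Hp E]]|[Pr|Nr]].
  - exists p. split; auto. apply (f_equal z) in E. unfold r in E. rewrite ginv_r in E; auto.
  - exfalso. apply (le_at_not_lt_on e r); auto.
  - exfalso. apply (le_at_not_lt_on _ _ R1). auto.
Qed.

(* Some r < p moves right since p is not least; then r or r^-1 p is at most half of p. *)
Lemma halve_moving_right p : ~ (exists e, least_moving_right e) -> Gab p -> moves_right p ->
  exists q, Gab q /\ moves_right q /\ le_at (fun x => q (q x)) p.
Proof.
  intros Hnoleast Hp Pp.
  assert (exists r, Gab r /\ moves_right r /\ ~ le_at p r) as [r [Hr [Pr Nr]]].
  { apply NNPP. intro N. apply Hnoleast. exists p. split; [auto|split; [auto|]].
    intros r Hr Pr. apply NNPP. intro N'. apply N. eauto. }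
  apply not_le_at_lt_on in Nr; auto.
  set (s := fun x => ginv r (p x)).
  assert (Hs : Gab s) by (unfold s; auto).
  assert (Ps : moves_right s) by (intros x Hx; unfold s; rewrite <- (G_lt r), ginv_r; auto).
  assert (Ers : forall x, r (s x) = p x) by (intro; unfold s; apply ginv_r; auto).
  destruct (order_trichotomy r s Hr Hs) as [L|[E|L]].
  - exists r. split; [auto|split; [auto|]].
    apply (le_at_ext (fun x => r (r x)) _ (fun x => r (s x)) p); auto.
    apply le_at_postcomp, lt_on_le_at; auto.
  - exists r. split; [auto|split; [auto|]].
    apply (le_at_ext (fun x => r (r x)) _ (fun x => r (s x)) p); auto.
    apply le_at_postcomp, eq_at_le_at; auto.
  - exists s. split; [auto|split; [auto|]].
    apply (le_at_ext (fun x => s (s x)) _ (fun x => r (s x)) p); auto.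
    apply lt_on_le_at, lt_on_precomp; auto.
Qed.

(* With q^2 <= (hg)^{-1} gh and q^n <= g < q^(n+1), q^m <= h < q^(m+1), one gets
   q^(m+n+2) <= gh < q^(m+n+2). *)
Lemma not_lt_on_commuted g h : ~ (exists e, least_moving_right e) -> Gab g -> Gab h ->
  ~ lt_on (fun x => h (g x)) (fun x => g (h x)).
Proof.
  intros Hnoleast Hg Hh L.
  set (hg := fun x => h (g x)). set (gh := fun x => g (h x)).
  assert (Hhg : Gab hg) by (unfold hg; auto). assert (Hgh : Gab gh) by (unfold gh; auto).
  set (p := fun x => ginv hg (gh x)).
  assert (Hp : Gab p) by (unfold p; auto).
  assert (Pp : moves_right p).
  { intros x Hx. unfold p. rewrite <- (G_lt hg), ginv_r; auto. apply L; auto. }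
  destruct (halve_moving_right p Hnoleast Hp Pp) as [q [Hq [Pq Lq]]].
  destruct (zpow_bracket q g Hq Pq Hg) as [n [Ln Un]].
  destruct (zpow_bracket q h Hq Pq Hh) as [m [Lm Um]].
  assert (Hlow : le_at (fun x => zpow q m (zpow q n (q (q x)))) gh).
  { apply (le_at_trans _ (fun x => hg (q (q x)))); auto.
    - apply (le_at_precomp (fun x => q (q x)) (fun x => zpow q m (zpow q n x)) hg); auto.
      unfold hg. apply le_at_comp; auto.
    - apply (le_at_ext (fun x => hg (q (q x))) _ (fun x => hg (p x)) gh);
        [reflexivity|intro; apply ginv_r; auto|].
      apply le_at_postcomp; auto. }
  assert (Hup : lt_on gh (fun x => zpow q (n + 1) (zpow q (m + 1) x)))
    by (unfold gh; apply lt_on_comp; auto).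
  apply (le_at_not_lt_on _ _ Hlow).
  apply (lt_on_ext gh gh (fun x => zpow q (n + 1) (zpow q (m + 1) x))); auto.
  intro x. replace (q (q x)) with (zpow q 2 x) by reflexivity.
  rewrite <- !zpow_add by auto. f_equal. lia.
Qed.

Lemma comm_eq_at g h : Gab g -> Gab h -> eq_at (fun x => g (h x)) (fun x => h (g x)).
Proof.
  intros Hg Hh. destruct (classic (exists e, least_moving_right e)) as [[e Le]|Hnoleast].
  - pose proof Le as [He _].
    destruct (eq_at_zpow_least e g Le Hg) as [n En].
    destruct (eq_at_zpow_least e h Le Hh) as [m Em].
    apply (eq_at_trans _ (zpow e (n + m))); auto.
    + apply (eq_at_ext (fun x => g (h x)) _ (fun x => zpow e n (zpow e m x))); auto.
      { intro. rewrite zpow_add; auto. }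
      apply eq_at_comp; auto.
    + apply eq_at_sym, (eq_at_ext (fun x => h (g x)) _ (fun x => zpow e m (zpow e n x))); auto.
      { intro. rewrite <- zpow_add, Z.add_comm; auto. }
      apply eq_at_comp; auto.
  - destruct (order_trichotomy (fun x => g (h x)) (fun x => h (g x))) as [L|[E|L]]; auto;
      exfalso; [apply (not_lt_on_commuted h g)|apply (not_lt_on_commuted g h)]; auto.
Qed.

(** * Translation number morphisms *)

Section Morphism.

Variable T : (R -> R) -> R.
Hypothesis HT : is_tau G a b T.

Lemma T_comp g h : Gab g -> Gab h -> T (fun x => g (h x)) = T g + T h.
Proof. apply HT. Qed.

Lemma T_pos g : Gab g -> (0 < T g <-> moves_right g).
Proof.
  intro Hg. destruct HT as [_ [_ P]]. rewrite (P g Hg).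
  split; intros Q x Hx; specialize (Q x Hx); lra.
Qed.

Lemma T_zero g : Gab g -> (T g = 0 <-> fixes_some g).
Proof. intro Hg. apply HT, Hg. Qed.

Lemma T_ext u v : (forall x, u x = v x) -> T u = T v.
Proof. intro E. f_equal. apply functional_extensionality; auto. Qed.

Lemma T_id : T (fun x => x) = 0.
Proof. pose proof (T_comp (fun x => x) (fun x => x) stab_id stab_id). lra. Qed.

Lemma T_inv g : Gab g -> T (ginv g) = - T g.
Proof.
  intro Hg. pose proof (T_comp g (ginv g) Hg (stab_inv g Hg)) as Hsum.
  rewrite (T_ext _ (fun x => x)), T_id in Hsum by (intro; apply ginv_r; auto). lra.
Qed.

Lemma T_neg g : Gab g -> (T g < 0 <-> moves_left g).
Proof.
  intro Hg. pose proof (T_inv g Hg). pose proof (T_pos (ginv g) (stab_inv g Hg)) as Hpos.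
  split; intro P.
  - intros x Hx. rewrite <- (ginv_ginv g x) by auto.
    apply moves_right_inv; auto. apply Hpos. lra.
  - apply moves_left_inv, Hpos in P; auto. lra.
Qed.

Lemma T_zpow u m : Gab u -> T (zpow u m) = IZR m * T u.
Proof.
  intro Hu. induction m using Z.peano_ind.
  - rewrite Rmult_0_l, <- T_id. apply T_ext. reflexivity.
  - rewrite (T_ext _ (fun x => u (zpow u m x))) by (intro; apply zpow_succ; auto).
    rewrite T_comp, IHm, succ_IZR by auto. ring.
  - rewrite (T_ext _ (fun x => ginv u (zpow u m x))) by (intro; apply zpow_pred; auto).
    rewrite T_comp, IHm, T_inv by auto. unfold Z.pred. rewrite plus_IZR. simpl. ring.
Qed.

Lemma T_iter u n : Gab u -> T (Nat.iter n u) = INR n * T u.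
Proof. intro Hu. rewrite <- zpow_of_nat, T_zpow, INR_IZR_INZ; auto. Qed.

Lemma T_diff u v : Gab u -> Gab v -> T (fun x => ginv u (v x)) = T v - T u.
Proof. intros Hu Hv. rewrite T_comp, T_inv by auto. ring. Qed.

Lemma T_le_at u v : Gab u -> Gab v -> le_at u v -> T u <= T v.
Proof.
  intros Hu Hv [p [Hp L]]. pose proof (T_diff u v Hu Hv).
  apply Rnot_lt_le. intro Hlt.
  assert (Hneg : moves_left (fun x => ginv u (v x))) by (apply T_neg; auto; lra).
  specialize (Hneg p Hp). rewrite <- (G_lt u), ginv_r in Hneg; auto. lra.
Qed.

Lemma T_eq_at u v : Gab u -> Gab v -> eq_at u v -> T u = T v.
Proof.
  intros Hu Hv [p [Hp E]]. pose proof (T_diff u v Hu Hv).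
  assert (Hfix : fixes_some (fun x => ginv u (v x))).
  { exists p. split; auto. rewrite <- E. apply ginv_l; auto. }
  apply T_zero in Hfix; auto. lra.
Qed.

End Morphism.

(* [m / n < T g / T f] iff [T (g^n f^-m)] > 0 iff [g^n f^-m] moves right: this does not
   depend on [T]. *)
Lemma is_tau_ratio_le T1 T2 f g : is_tau G a b T1 -> is_tau G a b T2 ->
  Gab f -> moves_right f -> Gab g -> T1 g / T1 f <= T2 g / T2 f.
Proof.
  intros HT1 HT2 Hf Pf Hg.
  assert (P1 : 0 < T1 f) by (apply (T_pos T1 HT1); auto).
  assert (P2 : 0 < T2 f) by (apply (T_pos T2 HT2); auto).
  set (s1 := T1 g / T1 f). set (s2 := T2 g / T2 f).
  apply Rnot_lt_le. intro Hlt.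
  destruct (small_inverse_nat (s1 - s2)) as [n [Hn Hn4]]; [lra|].
  destruct (frac_above s2 n Hn) as [m [A B]].
  assert (Hn0 : 0 < INR n) by (apply lt_0_INR; lia).
  assert (2 / INR n < 4 / INR n)
    by (unfold Rdiv; apply Rmult_lt_compat_r; [apply Rinv_0_lt_compat|]; lra).
  set (w := fun x => Nat.iter n g (zpow f (- m) x)).
  assert (Hw : Gab w) by (unfold w; auto).
  assert (Tw : forall T, is_tau G a b T -> T w = INR n * T f * (T g / T f - IZR m / INR n)).
  { intros T HT. unfold w. rewrite (T_comp T HT), (T_iter T HT), (T_zpow T HT), opp_IZR by auto.
    field. split; [lra|]. apply Rgt_not_eq, (T_pos T HT); auto. }
  assert (Hpos : 0 < T1 w) by (rewrite (Tw T1 HT1); fold s1; apply Rmult_lt_0_compat; nra).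
  rewrite (T_pos T1 HT1 w Hw), <- (T_pos T2 HT2 w Hw), (Tw T2 HT2) in Hpos. fold s2 in Hpos.
  assert (0 < INR n * T2 f) by nra. nra.
Qed.

Lemma is_tau_proportional T1 T2 : is_tau G a b T1 -> is_tau G a b T2 ->
  exists c, c > 0 /\ forall g, Gab g -> T2 g = c * T1 g.
Proof.
  intros HT1 HT2. destruct exists_moves_right as [f [Hf Pf]].
  assert (P1 : 0 < T1 f) by (apply (T_pos T1 HT1); auto).
  assert (P2 : 0 < T2 f) by (apply (T_pos T2 HT2); auto).
  exists (T2 f / T1 f). split; [apply Rdiv_lt_0_compat; auto|]. intros g Hg.
  pose proof (is_tau_ratio_le T1 T2 f g HT1 HT2 Hf Pf Hg).
  pose proof (is_tau_ratio_le T2 T1 f g HT2 HT1 Hf Pf Hg).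
  assert (E : T2 g / T2 f = T1 g / T1 f) by lra.
  apply (f_equal (fun t => t * T2 f)) in E. field_simplify in E; [|lra|lra].
  rewrite E. field. lra.
Qed.

Lemma iter_lt_on u v k : Gab u -> Gab v -> lt_on u v -> (k > 0)%nat ->
  lt_on (Nat.iter k u) (Nat.iter k v).
Proof.
  intros Hu Hv L Hk. induction k as [|k IH]; [lia|].
  destruct (Nat.eq_dec k 0) as [->|Hk0]; [exact L|].
  change (lt_on (fun x => u (Nat.iter k u x)) (fun x => v (Nat.iter k v x))).
  apply lt_on_comp; auto. apply IH; lia.
Qed.

Lemma iter_eq_at u v k : Gab u -> Gab v -> eq_at u v -> eq_at (Nat.iter k u) (Nat.iter k v).
Proof.
  intros Hu Hv E. induction k as [|k IH]; [apply eq_at_refl|].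
  change (eq_at (fun x => u (Nat.iter k u x)) (fun x => v (Nat.iter k v x))).
  apply eq_at_comp; auto.
Qed.

Lemma iter_le_at_id g n : Gab g -> le_at g (fun x => x) -> le_at (Nat.iter n g) (fun x => x).
Proof.
  intros Hg L. induction n as [|n IH]; [apply eq_at_le_at, eq_at_refl|].
  change (le_at (fun x => g (Nat.iter n g x)) (fun x => (fun y => y) ((fun y => y) x))).
  apply le_at_comp; auto.
Qed.

Lemma iter_comp_eq_at g h n : Gab g -> Gab h ->
  eq_at (Nat.iter n (fun x => g (h x))) (fun x => Nat.iter n g (Nat.iter n h x)).
Proof.
  intros Hg Hh. induction n as [|n IH]; [apply eq_at_refl|].
  change (eq_at (fun x => g (h (Nat.iter n (fun y => g (h y)) x)))
                (fun x => g (Nat.iter n g (h (Nat.iter n h x))))).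
  apply (eq_at_trans _ (fun x => g (h (Nat.iter n g (Nat.iter n h x))))); auto.
  - apply (eq_at_postcomp (fun x => g (h x))); auto.
  - apply eq_at_postcomp.
    apply (eq_at_precomp (Nat.iter n h) (fun x => h (Nat.iter n g x))
             (fun x => Nat.iter n g (h x)));
      auto.
    apply comm_eq_at; auto.
Qed.

Section Holder.

Variable f : R -> R.
Hypothesis Hf : Gab f.
Hypothesis Pf : moves_right f.

#[local] Hint Resolve Hf Pf : core.

Lemma le_at_zpow_iter_scale g m n k : Gab g -> (k > 0)%nat ->
  le_at (zpow f m) (Nat.iter n g) -> le_at (zpow f (m * Z.of_nat k)) (Nat.iter (n * k) g).
Proof.
  intros Hg Hk L. rewrite <- iter_zpow, <- iter_iter by auto.
  destruct (order_trichotomy (zpow f m) (Nat.iter n g)) as [L'|[E|L']]; auto.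
  - apply lt_on_le_at, iter_lt_on; auto.
  - apply eq_at_le_at, iter_eq_at; auto.
  - exfalso; apply (le_at_not_lt_on _ _ L L').
Qed.

Definition holder_ratio (g : R -> R) (r : R) : Prop :=
  exists (m : Z) (n : nat), (n > 0)%nat /\ r = IZR m / INR n /\ le_at (zpow f m) (Nat.iter n g).

Definition tau (g : R -> R) : R := epsilon (inhabits 0) (is_lub (holder_ratio g)).

Lemma holder_ratio_lt g m n : Gab g -> (n > 0)%nat -> lt_on (Nat.iter n g) (zpow f m) ->
  forall r, holder_ratio g r -> r < IZR m / INR n.
Proof.
  intros Hg Hn L r [m' [n' [Hn' [-> L']]]].
  apply (le_at_zpow_iter_scale g m' n' n Hg Hn) in L'.
  assert (L2 : lt_on (Nat.iter (n' * n) g) (zpow f (m * Z.of_nat n'))).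
  { rewrite <- iter_zpow by auto. replace (n' * n)%nat with (n * n')%nat by lia.
    rewrite <- iter_iter. apply iter_lt_on; auto. }
  apply frac_lt; auto. apply (zpow_lt_on_inv f); auto.
  apply (le_at_lt_on_trans _ (Nat.iter (n' * n) g)); auto.
Qed.

Lemma tau_spec g : Gab g -> is_lub (holder_ratio g) (tau g).
Proof.
  intro Hg. unfold tau. apply epsilon_spec.
  destruct (zpow_bracket f g Hf Pf Hg) as [n [L1 L2]].
  destruct (completeness (holder_ratio g)) as [t Ht]; [| |exists t; auto].
  - exists (IZR (n + 1) / INR 1). intros r Hr. left. apply (holder_ratio_lt g (n + 1) 1); auto.
  - exists (IZR n / INR 1), n, 1%nat. auto.
Qed.

Lemma frac_le_tau g m n : Gab g -> (n > 0)%nat -> le_at (zpow f m) (Nat.iter n g) ->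
  IZR m / INR n <= tau g.
Proof. intros Hg Hn L. apply (tau_spec g Hg). exists m, n. auto. Qed.

Lemma tau_le_frac g m n : Gab g -> (n > 0)%nat -> lt_on (Nat.iter n g) (zpow f m) ->
  tau g <= IZR m / INR n.
Proof.
  intros Hg Hn L. apply (tau_spec g Hg). intros r Hr. left. apply (holder_ratio_lt g m n); auto.
Qed.

Lemma le_at_of_frac_lt_tau g m n : Gab g -> (n > 0)%nat -> IZR m / INR n < tau g ->
  le_at (zpow f m) (Nat.iter n g).
Proof.
  intros Hg Hn L. apply NNPP. intro N. apply not_le_at_lt_on in N; auto.
  pose proof (tau_le_frac g m n Hg Hn N). lra.
Qed.

Lemma lt_on_of_tau_lt_frac g m n : Gab g -> (n > 0)%nat -> tau g < IZR m / INR n ->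
  lt_on (Nat.iter n g) (zpow f m).
Proof.
  intros Hg Hn L. apply NNPP. intro N. apply not_lt_on_le_at in N; auto.
  pose proof (frac_le_tau g m n Hg Hn N). lra.
Qed.

Lemma tau_comp_ge g h : Gab g -> Gab h -> tau g + tau h <= tau (fun x => g (h x)).
Proof.
  intros Hg Hh. apply Rnot_lt_le. intro Hlt.
  destruct (small_inverse_nat (tau g + tau h - tau (fun x => g (h x)))) as [n [Hn Hn4]]; [lra|].
  destruct (frac_below (tau g) n Hn) as [m1 [A1 B1]].
  destruct (frac_below (tau h) n Hn) as [m2 [A2 B2]].
  assert (L : le_at (zpow f (m1 + m2)) (Nat.iter n (fun x => g (h x)))).
  { apply (le_at_trans _ (fun x => Nat.iter n g (Nat.iter n h x))); auto.
    - apply (le_at_ext (fun x => zpow f m1 (zpow f m2 x)) _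
               (fun x => Nat.iter n g (Nat.iter n h x)));
        [intro; rewrite zpow_add; auto|reflexivity|].
      apply le_at_comp; auto; apply le_at_of_frac_lt_tau; auto.
    - apply eq_at_le_at, eq_at_sym, iter_comp_eq_at; auto. }
  pose proof (frac_le_tau _ _ _ (stab_comp g h Hg Hh) Hn L) as Hle.
  rewrite plus_IZR in Hle. unfold Rdiv in *. lra.
Qed.

Lemma tau_comp_le g h : Gab g -> Gab h -> tau (fun x => g (h x)) <= tau g + tau h.
Proof.
  intros Hg Hh. apply Rnot_lt_le. intro Hlt.
  destruct (small_inverse_nat (tau (fun x => g (h x)) - (tau g + tau h))) as [n [Hn Hn4]]; [lra|].
  destruct (frac_above (tau g) n Hn) as [m1 [A1 B1]].
  destruct (frac_above (tau h) n Hn) as [m2 [A2 B2]].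
  assert (L : lt_on (Nat.iter n (fun x => g (h x))) (zpow f (m1 + m2))).
  { apply (le_at_lt_on_trans _ (fun x => Nat.iter n g (Nat.iter n h x))); auto.
    - apply eq_at_le_at, iter_comp_eq_at; auto.
    - apply (lt_on_ext (fun x => Nat.iter n g (Nat.iter n h x)) _
               (fun x => zpow f m1 (zpow f m2 x)));
        [reflexivity|intro; rewrite zpow_add; auto|].
      apply lt_on_comp; auto; apply lt_on_of_tau_lt_frac; auto. }
  pose proof (tau_le_frac _ _ _ (stab_comp g h Hg Hh) Hn L) as Hle.
  rewrite plus_IZR in Hle. unfold Rdiv in *. lra.
Qed.

Lemma tau_comp g h : Gab g -> Gab h -> tau (fun x => g (h x)) = tau g + tau h.
Proof. intros. apply Rle_antisym; [apply tau_comp_le|apply tau_comp_ge]; auto. Qed.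

Lemma tau_pos_moves_right g : Gab g -> 0 < tau g -> moves_right g.
Proof.
  intros Hg Hpos.
  destruct (small_inverse_nat (tau g)) as [n [Hn Hn4]]; auto.
  destruct (frac_below (tau g) n Hn) as [m [A B]].
  assert (0 < INR n) by (apply lt_0_INR; lia).
  assert (Hm : (0 < m)%Z).
  { apply lt_0_IZR. replace (IZR m) with (IZR m / INR n * INR n) by (field; lra).
    unfold Rdiv in *. nra. }
  assert (L : lt_on (fun x => x) (Nat.iter n g)).
  { apply (lt_on_le_at_trans _ (zpow f m)); auto.
    - apply (zpow_lt_on f 0 m); auto.
    - apply le_at_of_frac_lt_tau; auto. }
  apply NNPP. intro Hnr.
  assert (Lg : le_at g (fun x => x)).
  { destruct (stab_trichotomy g Hg) as [[p [Hp E]]|[Hr|Hl]]; [|contradiction|].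
    - exists p. split; auto. lra.
    - exists midpoint. split; auto. left; auto. }
  apply (le_at_not_lt_on _ _ (iter_le_at_id g n Hg Lg) L).
Qed.

Lemma moves_right_tau_pos g : Gab g -> moves_right g -> 0 < tau g.
Proof.
  intros Hg Pg. set (x0 := midpoint).
  destruct (iter_unbounded g x0 (f x0)) as [N HN]; auto. apply stab_inside; auto.
  assert (HN0 : (N > 0)%nat).
  { destruct N; [|lia]. simpl in HN. pose proof (Pf x0 midpoint_inside). exfalso; lra. }
  assert (L : le_at (zpow f 1) (Nat.iter N g)).
  { exists x0. split; [apply midpoint_inside|]. change (zpow f 1 x0) with (f x0). lra. }
  pose proof (frac_le_tau g 1 N Hg HN0 L).
  assert (0 < IZR 1 / INR N) by (apply Rdiv_lt_0_compat; [lra|apply lt_0_INR; lia]). lra.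
Qed.

Lemma tau_pos g : Gab g -> (0 < tau g <-> moves_right g).
Proof.
  intro Hg. split; [apply tau_pos_moves_right|apply moves_right_tau_pos]; auto.
Qed.

Lemma tau_inv g : Gab g -> tau (ginv g) = - tau g.
Proof.
  intro Hg. pose proof (tau_comp g (ginv g) Hg (stab_inv g Hg)) as Hsum.
  pose proof (tau_comp (fun x => x) (fun x => x) stab_id stab_id) as Hid.
  replace (fun x => g (ginv g x)) with (fun x : R => x) in Hsum
    by (apply functional_extensionality; intro; rewrite ginv_r; auto).
  lra.
Qed.

Lemma tau_zero g : Gab g -> (tau g = 0 <-> fixes_some g).
Proof.
  intro Hg. pose proof (tau_inv g Hg). pose proof (tau_pos (ginv g) (stab_inv g Hg)) as Hpos.
  split; intro E.
  - destruct (stab_trichotomy g Hg) as [K|[Hr|Hl]]; auto; exfalso.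
    + apply tau_pos in Hr; auto. lra.
    + apply moves_left_inv, Hpos in Hl; auto. lra.
  - destruct E as [p [Hp Ep]].
    destruct (Rtotal_order (tau g) 0) as [L|[L|L]]; auto; exfalso.
    + assert (Hr : moves_right (ginv g)) by (apply Hpos; lra).
      specialize (Hr (g p) ltac:(rewrite Ep; auto)). rewrite ginv_l, Ep in Hr; auto. lra.
    + apply tau_pos in L; auto. specialize (L p Hp). lra.
Qed.

Lemma is_tau_tau : is_tau G a b tau.
Proof.
  split; [|split]; intros g Hg.
  - intros h Hh. apply tau_comp; auto.
  - apply tau_zero; auto.
  - rewrite (tau_pos g Hg). split; intros P x Hx; specialize (P x Hx); lra.
Qed.

(** * Minimal sets and the semi-conjugacy *)

Definition smallest_invariant (M : R -> Prop) : Prop :=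
  forall N, (exists z, N z) -> rel_closed a b N -> invariant_set Gab N -> forall y, M y -> N y.

Lemma Lambda_eq_smallest M : (exists z, M z) -> rel_closed a b M -> invariant_set Gab M ->
  smallest_invariant M -> Lambda G a b = M.
Proof.
  intros Ne Cl Inv Sm. apply functional_extensionality. intro x.
  apply propositional_extensionality. split.
  - intros [M' [[Ne' [Cl' [Inv' Min']]] Hx]].
    apply (Min' M Ne Cl Inv); auto. intros y Hy. apply (Sm M' Ne' Cl' Inv'); auto.
  - intro Hx. exists M. split; [|exact Hx]. split; [exact Ne|split; [exact Cl|split; [exact Inv|]]].
    intros N NeN ClN InvN Sub y Hy. apply (Sm N NeN ClN InvN); auto.
Qed.

Lemma Lambda_properties M psi : Lambda G a b = M -> (exists z, M z) -> rel_closed a b M ->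
  (forall x y, a < x < b -> a < y < b -> x <= y -> psi x <= psi y) ->
  (forall x eps, a < x < b -> eps > 0 -> exists delta, delta > 0 /\
     forall y, a < y < b -> Rabs (y - x) < delta -> Rabs (psi y - psi x) < eps) ->
  (forall g x, Gab g -> M x -> psi (g x) = psi x + tau g) ->
  (forall g x, Gab g -> tau g = 0 -> M x -> g x = x) ->
  (exists x, Lambda G a b x) /\ rel_closed a b (Lambda G a b) /\
  semi_conjugated Gab (Lambda G a b) tau /\
  (forall g, Gab g -> tau g = 0 -> forall x, Lambda G a b x -> g x = x).
Proof.
  intros -> Ne Cl Hmono Hcont Heq Hker.
  split; [auto|split; [auto|split]].
  - exists psi. split; [|split]; auto.
    + intros x y Mx My. apply Hmono; apply Cl; auto.
    + intros x Mx eps He. destruct (Hcont x eps (proj1 Cl x Mx) He) as [d [Hd Hd']].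
      exists d. split; auto. intros y My. apply Hd', Cl, My.
  - intros g Hg Tg x Mx. apply Hker; auto.
Qed.

(* The semi-conjugacy when no least moving-right element exists; in the other case it is
   a step function and [phi_cyclic] below is used instead. *)
Definition phi_set (x r : R) : Prop := exists h, Gab h /\ h midpoint <= x /\ r = tau h.

Definition phi (x : R) : R := epsilon (inhabits 0) (is_lub (phi_set x)).

Lemma phi_spec x : a < x < b -> is_lub (phi_set x) (phi x).
Proof.
  intro Hx. unfold phi. apply epsilon_spec.
  destruct (zpow_above f midpoint x) as [m Hm]; auto.
  destruct (zpow_below f midpoint x) as [m' Hm']; auto.
  destruct (completeness (phi_set x)) as [t Ht]; [| |exists t; auto].
  - exists (tau (zpow f m)). intros r [h [Hh [Le ->]]].
    apply (T_le_at tau is_tau_tau); auto. exists midpoint. split; auto. lra.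
  - exists (tau (zpow f m')), (zpow f m'). split; auto. split; auto. lra.
Qed.

Lemma phi_at h : Gab h -> phi (h midpoint) = tau h.
Proof.
  intro Hh. destruct (phi_spec (h midpoint) (stab_inside h midpoint Hh midpoint_inside)) as [U L].
  apply Rle_antisym.
  - apply L. intros r [h' [Hh' [Le ->]]]. apply (T_le_at tau is_tau_tau); auto.
    exists midpoint. split; auto.
  - apply U. exists h. split; auto. split; auto. lra.
Qed.

Lemma phi_mono x y : a < x < b -> a < y < b -> x <= y -> phi x <= phi y.
Proof.
  intros Hx Hy Le. destruct (phi_spec x Hx) as [U L]. destruct (phi_spec y Hy) as [U' L'].
  apply L. intros r [h [Hh [Le' ->]]]. apply U'. exists h. split; auto. split; auto. lra.
Qed.

Lemma phi_lt_inv x y : a < x < b -> a < y < b -> phi x < phi y -> x < y.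
Proof.
  intros Hx Hy L. apply Rnot_le_lt. intro Hle. pose proof (phi_mono y x Hy Hx Hle). lra.
Qed.

Lemma phi_equiv g x : Gab g -> a < x < b -> phi (g x) = phi x + tau g.
Proof.
  intros Hg Hx.
  assert (Igx : a < g x < b) by (apply stab_inside; auto).
  destruct (phi_spec x Hx) as [U L]. destruct (phi_spec (g x) Igx) as [U' L'].
  apply Rle_antisym.
  - cut (phi (g x) <= phi x + tau g); [lra|].
    apply L'. intros r [h [Hh [Le ->]]].
    assert (Hle : tau (fun y => ginv g (h y)) <= phi x).
    { apply U. exists (fun y => ginv g (h y)). split; auto. split; auto.
      rewrite <- (G_le g), ginv_r; auto. }
    rewrite (T_diff tau is_tau_tau g h Hg Hh) in Hle. lra.
  - cut (phi x <= phi (g x) - tau g); [lra|].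
    apply L. intros r [h [Hh [Le ->]]].
    assert (Hle : tau (fun y => g (h y)) <= phi (g x)).
    { apply U'. exists (fun y => g (h y)). split; auto. split; auto. apply G_le; auto. }
    rewrite tau_comp in Hle; auto. lra.
Qed.

Section Dense.

Hypothesis Hnoleast : ~ (exists e, least_moving_right e).

Lemma tau_halving_iter k : exists q, Gab q /\ moves_right q /\ (INR k + 1) * tau q <= tau f.
Proof.
  induction k as [|k [q [Hq [Pq Lq]]]].
  - exists f. split; [auto|split; [auto|]]. simpl. lra.
  - destruct (halve_moving_right q Hnoleast Hq Pq) as [q' [Hq' [Pq' L']]].
    exists q'. split; [auto|split; [auto|]].
    pose proof (T_le_at tau is_tau_tau _ _ (stab_comp q' q' Hq' Hq') Hq L') as Hle.
    rewrite tau_comp in Hle; auto.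
    pose proof (moves_right_tau_pos q' Hq' Pq'). pose proof (pos_INR k). rewrite S_INR. nra.
Qed.

Lemma tau_small eps : eps > 0 -> exists q, Gab q /\ 0 < tau q < eps.
Proof.
  intro He. pose proof (moves_right_tau_pos f Hf Pf) as Tf.
  destruct (archimed (tau f / eps)) as [A _]. set (N := up (tau f / eps)) in *.
  assert (HN : 0 < IZR N) by (assert (0 < tau f / eps) by (apply Rdiv_lt_0_compat; lra); lra).
  assert (A' : tau f < IZR N * eps).
  { apply (Rmult_lt_compat_r eps) in A; [|lra]. unfold Rdiv in A.
    rewrite Rmult_assoc, Rinv_l, Rmult_1_r in A by lra. lra. }
  destruct (tau_halving_iter (Z.to_nat N)) as [q [Hq [Pq Lq]]].
  rewrite INR_IZR_INZ in Lq.
  replace (Z.of_nat (Z.to_nat N)) with N in Lq by (apply lt_0_IZR in HN; lia).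
  exists q. split; auto. pose proof (moves_right_tau_pos q Hq Pq). split; [auto|nra].
Qed.

Lemma tau_dense t eps : eps > 0 -> exists h, Gab h /\ Rabs (tau h - t) < eps.
Proof.
  intro He. destruct (tau_small eps He) as [q [Hq [Tq Tq']]].
  set (d := tau q) in *. set (s := t / d).
  destruct (archimed s) as [B C].
  exists (zpow q (up s - 1)). split; auto.
  rewrite (T_zpow tau is_tau_tau), minus_IZR by auto. fold d.
  assert (E : t = s * d) by (unfold s; field; lra).
  assert ((IZR (up s) - 1) * d > t - d) by (rewrite E; nra).
  assert ((IZR (up s) - 1) * d <= t) by (rewrite E; nra).
  rewrite Rabs_left1; lra.
Qed.

Lemma phi_cont x eps : a < x < b -> eps > 0 -> exists delta, delta > 0 /\
  forall y, a < y < b -> Rabs (y - x) < delta -> Rabs (phi y - phi x) < eps.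
Proof.
  intros Hx He.
  destruct (tau_dense (phi x - eps / 2) (eps / 2)) as [h1 [Hh1 E1]]; [lra|].
  destruct (tau_dense (phi x + eps / 2) (eps / 2)) as [h2 [Hh2 E2]]; [lra|].
  apply Rabs_def2 in E1. apply Rabs_def2 in E2.
  set (y1 := h1 midpoint). set (y2 := h2 midpoint).
  assert (I1 : a < y1 < b) by (apply stab_inside; auto).
  assert (I2 : a < y2 < b) by (apply stab_inside; auto).
  assert (L1 : y1 < x) by (apply phi_lt_inv; auto; unfold y1; rewrite phi_at; auto; lra).
  assert (L2 : x < y2) by (apply phi_lt_inv; auto; unfold y2; rewrite phi_at; auto; lra).
  exists (Rmin (x - y1) (y2 - x)). split; [apply Rmin_pos; lra|].
  intros y Hy Hd. apply Rabs_def2 in Hd.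
  pose proof (Rmin_l (x - y1) (y2 - x)). pose proof (Rmin_r (x - y1) (y2 - x)).
  pose proof (phi_mono y1 y I1 Hy ltac:(lra)). pose proof (phi_mono y y2 Hy I2 ltac:(lra)).
  unfold y1, y2 in *. rewrite phi_at in *; auto. apply Rabs_def1; lra.
Qed.

Lemma phi_left_strict_point : exists y, a < y < b /\ midpoint < y /\
  forall z, midpoint <= z < y -> phi z < phi y.
Proof.
  pose proof midpoint_inside. pose proof (Pf midpoint midpoint_inside).
  pose proof (stab_inside f midpoint Hf midpoint_inside).
  assert (Hphi : phi midpoint < phi (f midpoint)).
  { pose proof (phi_at (fun x => x) stab_id) as E0. cbv beta in E0.
    rewrite phi_at, E0, (T_id tau is_tau_tau) by auto. apply moves_right_tau_pos; auto. }
  destruct (exists_left_strict_point phi midpoint (f midpoint)) as [y [Hy Hstrict]]; auto.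
  - intros. apply phi_mono; auto; lra.
  - intros x eps Hx He. destruct (phi_cont x eps ltac:(lra) He) as [d [Hd Hd']].
    exists d. split; auto. intros y Hy. apply Hd'. lra.
  - exists y. repeat split; try lra. auto.
Qed.

Definition in_every_orbit_closure (y : R) : Prop :=
  a < y < b /\ forall x, a < x < b -> forall eps, eps > 0 ->
    exists h, Gab h /\ Rabs (h x - y) < eps.

(* By density of the values of tau, some [h x] has phi-value between those of y and of a
   point w just left of y. *)
Lemma left_strict_in_every_orbit_closure y : a < y < b -> midpoint < y ->
  (forall z, midpoint <= z < y -> phi z < phi y) -> in_every_orbit_closure y.
Proof.
  intros Iy Hy Hstrict. split; auto. intros x Hx eps He.
  pose proof midpoint_inside.
  set (w := Rmax midpoint (y - eps / 2)).
  assert (Hw : midpoint <= w /\ y - eps / 2 <= w /\ w < y)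
    by (unfold w; split; [apply Rmax_l|split; [apply Rmax_r|apply Rmax_lub_lt; lra]]).
  pose proof (Hstrict w ltac:(lra)).
  destruct (tau_dense ((phi w + phi y) / 2 - phi x) ((phi y - phi w) / 2)) as [h [Hh Eh]];
    [lra|].
  apply Rabs_def2 in Eh. exists h. split; auto.
  assert (Ihx : a < h x < b) by (apply stab_inside; auto).
  pose proof (phi_equiv h x Hh Hx).
  assert (w < h x) by (apply phi_lt_inv; auto; lra).
  assert (h x < y) by (apply phi_lt_inv; auto; lra).
  apply Rabs_def1; lra.
Qed.

Lemma in_every_orbit_closure_closed : rel_closed a b in_every_orbit_closure.
Proof.
  split; [intros x [Hx _]; auto|].
  intros y Hy Hap. split; auto. intros x Hx eps He.
  destruct (Hap (eps / 2) ltac:(lra)) as [y' [[Iy' My'] D]].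
  destruct (My' x Hx (eps / 2) ltac:(lra)) as [h [Hh Dh]].
  exists h. split; auto.
  replace (h x - y) with ((h x - y') + (y' - y)) by ring.
  eapply Rle_lt_trans; [apply Rabs_triang|]. lra.
Qed.

Lemma in_every_orbit_closure_invariant : invariant_set Gab in_every_orbit_closure.
Proof.
  assert (Himage : forall g y, Gab g -> in_every_orbit_closure y -> in_every_orbit_closure (g y)).
  { intros g y Hg [Iy My]. split; [apply stab_inside; auto|].
    intros z Hz eps He.
    destruct (continuity_eps g (G_cont _ (stab_G g Hg)) y eps He) as [d [Hd Hc]].
    destruct (My z Hz d Hd) as [h [Hh Dh]].
    exists (fun x => g (h x)). split; auto. }
  intros g Hg y. split.
  - intro My. exists (ginv g y). split; [|apply ginv_r; auto]. apply Himage; auto.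
  - intros [x [Mx <-]]. apply Himage; auto.
Qed.

Lemma in_every_orbit_closure_smallest : smallest_invariant in_every_orbit_closure.
Proof.
  intros N [z Nz] [NI NC] Inv y [Iy My].
  apply NC; auto. intros eps He.
  destruct (My z (NI z Nz) eps He) as [h [Hh Dh]].
  exists (h z). split; auto. apply (Inv h Hh). exists z. auto.
Qed.

(* Some [h s] lies in (y1, y2), and phi drops strictly just left of [h s]. *)
Lemma phi_strict_around y y1 y2 : in_every_orbit_closure y -> a < y1 -> y2 < b ->
  y1 < y < y2 -> phi y1 < phi y2.
Proof.
  intros [Iy My] Hy1 Hy2 Hy.
  destruct phi_left_strict_point as [s [Is [Hs Hstrict]]].
  destruct (My s Is (Rmin (y - y1) (y2 - y)) ltac:(apply Rmin_pos; lra)) as [h [Hh Dh]].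
  pose proof (Rmin_l (y - y1) (y2 - y)). pose proof (Rmin_r (y - y1) (y2 - y)).
  apply Rabs_def2 in Dh. pose proof midpoint_inside.
  assert (Ihs : a < h s < b) by (apply stab_inside; auto).
  assert (G1 : ginv h y1 < s) by (rewrite <- (G_lt h), ginv_r; auto; lra).
  set (z := Rmax midpoint ((ginv h y1 + s) / 2)).
  assert (Hz : midpoint <= z /\ (ginv h y1 + s) / 2 <= z /\ z < s)
    by (unfold z; split; [apply Rmax_l|split; [apply Rmax_r|apply Rmax_lub_lt; lra]]).
  assert (Ihz : a < h z < b) by (apply stab_inside; auto; lra).
  assert (y1 <= h z) by (rewrite <- (ginv_r h y1), G_le by auto; lra).
  assert (h z < h s) by (apply G_lt; auto; lra).
  pose proof (phi_mono y1 (h z) ltac:(lra) Ihz ltac:(lra)).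
  pose proof (phi_mono (h s) y2 Ihs ltac:(lra) ltac:(lra)).
  rewrite phi_equiv in * by (auto; lra).
  pose proof (Hstrict z ltac:(lra)). lra.
Qed.

Lemma kernel_fixes_in_every_orbit_closure k y : Gab k -> tau k = 0 ->
  in_every_orbit_closure y -> k y = y.
Proof.
  intros Hk Tk My. pose proof My as [Iy _]. apply NNPP. intro Hne.
  assert (Iu : a < k y < b) by (apply stab_inside; auto).
  assert (Iv : a < ginv k y < b) by (apply stab_inside; auto).
  assert (Pu : phi (k y) = phi y) by (rewrite phi_equiv; auto; lra).
  assert (Pv : phi (ginv k y) = phi y)
    by (rewrite phi_equiv, (T_inv tau is_tau_tau) by auto; lra).
  destruct (Rlt_or_le y (k y)) as [Hlt|Hle].
  - assert (ginv k y < y) by (rewrite <- (G_lt k), ginv_r; auto).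
    pose proof (phi_strict_around y (ginv k y) (k y) My ltac:(lra) ltac:(lra) ltac:(lra)). lra.
  - assert (y < ginv k y) by (rewrite <- (G_lt k), ginv_r; auto; lra).
    pose proof (phi_strict_around y (k y) (ginv k y) My ltac:(lra) ltac:(lra) ltac:(lra)). lra.
Qed.

Lemma dense_Lambda_properties :
  (exists x, Lambda G a b x) /\ rel_closed a b (Lambda G a b) /\
  semi_conjugated Gab (Lambda G a b) tau /\
  (forall g, Gab g -> tau g = 0 -> forall x, Lambda G a b x -> g x = x).
Proof.
  destruct phi_left_strict_point as [y [Iy [Hy Hstrict]]].
  assert (Ne : exists y, in_every_orbit_closure y)
    by (exists y; apply left_strict_in_every_orbit_closure; auto).
  apply (Lambda_properties in_every_orbit_closure phi); auto.
  - apply Lambda_eq_smallest; auto.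
    + apply in_every_orbit_closure_closed.
    + apply in_every_orbit_closure_invariant.
    + apply in_every_orbit_closure_smallest.
  - apply in_every_orbit_closure_closed.
  - apply phi_mono.
  - apply phi_cont.
  - intros g x Hg [Ix _]. apply phi_equiv; auto.
  - intros g x Hg Tg Mx. apply kernel_fixes_in_every_orbit_closure; auto.
Qed.

End Dense.

Section Cyclic.

Variable e : R -> R.
Hypothesis He : Gab e.
Hypothesis Pe : moves_right e.
Hypothesis Hleast : forall p, Gab p -> moves_right p -> le_at e p.

#[local] Hint Resolve He Pe : core.

Definition fixed_by_kernel (x : R) : Prop :=
  a < x < b /\ forall k, Gab k -> fixes_some k -> k x = x.

Lemma kernel_lt_on_least k : Gab k -> fixes_some k -> lt_on k e.
Proof.
  intros Hk [p [Hp E]]. apply (le_at_lt_on_trans _ (fun x => x)); auto.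
  exists p. split; auto. lra.
Qed.

Lemma fixed_by_kernel_act g x : Gab g -> fixed_by_kernel x ->
  exists n, g x = zpow e n x /\ tau g = IZR n * tau e.
Proof.
  intros Hg [Ix Fx]. destruct (eq_at_zpow_least e g (conj He (conj Pe Hleast)) Hg) as [n En].
  exists n. split.
  - assert (Kk : fixes_some (fun y => ginv (zpow e n) (g y))).
    { destruct En as [p [Hp Ep]]. exists p. split; auto. rewrite Ep. apply ginv_l; auto. }
    pose proof (Fx _ (stab_comp _ _ (stab_inv _ (stab_zpow e n He)) Hg) Kk) as Hfix.
    apply (f_equal (zpow e n)) in Hfix.
    rewrite ginv_r in Hfix; auto.
  - rewrite (T_eq_at tau is_tau_tau g (zpow e n)), (T_zpow tau is_tau_tau); auto.
Qed.

Lemma fixed_by_kernel_image g x : Gab g -> fixed_by_kernel x -> fixed_by_kernel (g x).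
Proof.
  intros Hg [Ix Fx]. split; [apply stab_inside; auto|]. intros k Hk Kk.
  assert (Kk' : fixes_some (fun y => ginv g (k (g y)))).
  { destruct Kk as [p [Hp Ep]]. exists (ginv g p). split; [apply stab_inside; auto|].
    rewrite ginv_r, Ep; auto. }
  pose proof (Fx (fun y => ginv g (k (g y))) ltac:(auto) Kk') as Hfix. apply (f_equal g) in Hfix.
  rewrite ginv_r in Hfix; auto.
Qed.

Lemma fixed_by_kernel_closed : rel_closed a b fixed_by_kernel.
Proof.
  split; [intros x [Ix _]; auto|].
  intros x Ix Hap. split; auto. intros k Hk Kk.
  apply fixed_point_of_limit; [apply G_cont; auto|]. intros eps Heps.
  destruct (Hap eps Heps) as [y [[Iy Fy] D]]. exists y. split; auto.
Qed.

(* Kernel elements compose (common fixed points), so the supremum of a kernel orbit, which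
   lies below [e x], is fixed by the whole kernel. *)
Lemma kernel_orbit_sup x : a < x < b -> exists s, fixed_by_kernel s /\
  forall eps, eps > 0 -> exists k, Gab k /\ fixes_some k /\ Rabs (k x - s) < eps.
Proof.
  intro Ix. set (KS := fun z => exists k, Gab k /\ fixes_some k /\ z = k x).
  assert (Iex : a < e x < b) by (apply stab_inside; auto).
  assert (Hid : KS x) by (exists (fun y => y); split; auto; split; auto; exists x; auto).
  destruct (completeness KS) as [s [U L]]; [|exists x; auto|].
  { exists (e x). intros z [k [Hk [Kk ->]]]. left. apply kernel_lt_on_least; auto. }
  assert (x <= s) by (apply U; auto).
  assert (s <= e x)
    by (apply L; intros z [k [Hk [Kk ->]]]; left; apply kernel_lt_on_least; auto).
  assert (Is : a < s < b) by (pose proof (Pe x Ix); lra).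
  assert (Key : forall k, Gab k -> fixes_some k -> s <= ginv k s).
  { intros k Hk Kk. apply L. intros z [k' [Hk' [Kk' ->]]].
    rewrite <- (G_le k), ginv_r by auto.
    apply U. exists (fun y => k (k' y)). split; auto. split; auto. apply fixes_some_comp; auto. }
  exists s. split.
  - split; auto. intros k Hk Kk.
    pose proof (Key k Hk Kk).
    pose proof (Key (ginv k) (stab_inv k Hk) (fixes_some_inv k Hk Kk)) as Hk'.
    rewrite ginv_ginv in Hk' by auto.
    assert (k s <= s) by (rewrite <- (ginv_r k s) at 2 by auto; apply G_le; auto).
    lra.
  - intros eps Heps. apply NNPP. intro N.
    assert (s <= s - eps); [|lra]. apply L. intros z [k [Hk [Kk ->]]].
    apply Rnot_lt_le. intro Hlt. apply N. exists k. split; auto. split; auto.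
    assert (k x <= s) by (apply U; exists k; auto). rewrite Rabs_left1; lra.
Qed.

Definition orbit (x z : R) : Prop := exists h, Gab h /\ h x = z.

Lemma orbit_invariant x : invariant_set Gab (orbit x).
Proof.
  intros g Hg y. split.
  - intros [h [Hh <-]]. exists (ginv g (h x)). split; [|apply ginv_r; auto].
    exists (fun z => ginv g (h z)). split; auto.
  - intros [z [[h [Hh <-]] <-]]. exists (fun z => g (h z)). split; auto.
Qed.

(* On such an orbit G_[a,b] acts through the discrete powers of e. *)
Lemma orbit_closed x : fixed_by_kernel x -> rel_closed a b (orbit x).
Proof.
  intros Fx. pose proof Fx as [Ix _].
  split; [intros z [h [Hh <-]]; apply stab_inside; auto|].
  intros z Iz Hap.
  destruct (zpow_floor e x z He Pe Ix Iz) as [n [Hn1 Hn2]].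
  destruct (Req_dec (zpow e n x) z) as [E|Ne]; [exists (zpow e n); auto|exfalso].
  destruct (Hap (Rmin (z - zpow e n x) (zpow e (n + 1) x - z)) ltac:(apply Rmin_pos; lra))
    as [w [[h [Hh <-]] D]].
  pose proof (Rmin_l (z - zpow e n x) (zpow e (n + 1) x - z)).
  pose proof (Rmin_r (z - zpow e n x) (zpow e (n + 1) x - z)).
  destruct (fixed_by_kernel_act h x Hh Fx) as [m [Em _]]. rewrite Em in D.
  apply Rabs_def2 in D.
  destruct (Z.le_gt_cases m n) as [Hmn|Hmn].
  - pose proof (zpow_le e m n x He Pe Hmn Ix). lra.
  - pose proof (zpow_le e (n + 1) m x He Pe ltac:(lia) Ix). lra.
Qed.

Lemma orbit_minimal x : fixed_by_kernel x -> minimal_set Gab a b (orbit x).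
Proof.
  intro Fx. split; [exists x, (fun y => y); split; auto|].
  split; [apply orbit_closed; auto|]. split; [apply orbit_invariant|].
  intros N [z0 Nz0] ClN InvN Sub y [h [Hh <-]].
  destruct (Sub z0 Nz0) as [h0 [Hh0 E0]].
  apply (InvN (fun z => h (ginv h0 z))); auto.
  exists z0. split; auto. rewrite <- E0, ginv_l; auto.
Qed.

(* A minimal set M contains the supremum s of a kernel orbit, hence the orbit of s, hence
   equals it. *)
Lemma Lambda_eq_fixed_by_kernel : Lambda G a b = fixed_by_kernel.
Proof.
  apply functional_extensionality. intro y. apply propositional_extensionality. split.
  - intros [M [[NeM [ClM [InvM MinM]]] My]].
    destruct (kernel_orbit_sup y (proj1 ClM y My)) as [s [Fs Aps]].
    assert (Ms : M s).
    { apply (proj2 ClM); [apply Fs|]. intros eps Heps.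
      destruct (Aps eps Heps) as [k [Hk [Kk D]]]. exists (k y). split; auto.
      apply (InvM k Hk). exists y; auto. }
    assert (Sub : forall z, orbit s z -> M z).
    { intros z [h [Hh <-]]. apply (InvM h Hh). exists s; auto. }
    pose proof (orbit_minimal s Fs) as [NeO [ClO [InvO _]]].
    destruct (MinM (orbit s) NeO ClO InvO Sub y My) as [h [Hh <-]].
    apply fixed_by_kernel_image; auto.
  - intro Fy. exists (orbit y). split; [apply orbit_minimal; auto|].
    exists (fun z => z). split; auto.
Qed.

Definition between_powers (n : Z) (y : R) : Prop :=
  zpow e n midpoint <= y < zpow e (n + 1) midpoint.

Lemma between_powers_unique n n' y : between_powers n y -> between_powers n' y -> n = n'.
Proof.
  intros [A B] [C D]. destruct (Z.lt_total n n') as [Hl|[Hl|Hl]]; auto; exfalso.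
  - pose proof (zpow_le e (n + 1) n' midpoint He Pe ltac:(lia) midpoint_inside). lra.
  - pose proof (zpow_le e (n' + 1) n midpoint He Pe ltac:(lia) midpoint_inside). lra.
Qed.

Definition power_index (y : R) : Z := epsilon (inhabits 0%Z) (fun n => between_powers n y).

Lemma power_index_spec y : a < y < b -> between_powers (power_index y) y.
Proof. intro Iy. unfold power_index. apply epsilon_spec, zpow_floor; auto. Qed.

Lemma power_index_eq y n : a < y < b -> between_powers n y -> power_index y = n.
Proof. intros Iy B. apply (between_powers_unique _ _ y); auto. apply power_index_spec; auto. Qed.

(* On [e^n x0, e^(n+1) x0) the semi-conjugacy is affine in the coordinate e^-n y. *)
Definition affine_piece (n : Z) (y : R) : R :=
  tau e * (IZR n + (zpow e (- n) y - midpoint) / (e midpoint - midpoint)).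

Definition phi_cyclic (y : R) : R := affine_piece (power_index y) y.

Lemma fundamental_gap : 0 < e midpoint - midpoint.
Proof. pose proof (Pe midpoint midpoint_inside). lra. Qed.

Lemma between_powers_fraction n y : between_powers n y ->
  0 <= (zpow e (- n) y - midpoint) / (e midpoint - midpoint) < 1.
Proof.
  intros [A B]. pose proof fundamental_gap.
  assert (midpoint <= zpow e (- n) y) by (rewrite <- (zpow_opp e n midpoint), G_le; auto).
  assert (zpow e (- n) y < e midpoint).
  { replace (e midpoint) with (zpow e (- n) (zpow e (n + 1) midpoint)); [apply G_lt; auto|].
    rewrite <- zpow_add by auto. replace (- n + (n + 1))%Z with 1%Z by lia. reflexivity. }
  assert (Hdiv : forall t, (t - midpoint) / (e midpoint - midpoint) * (e midpoint - midpoint)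
    = t - midpoint) by (intro; field; lra).
  split; [apply (Rmult_le_reg_r (e midpoint - midpoint))
         |apply (Rmult_lt_reg_r (e midpoint - midpoint))];
    rewrite ?Hdiv; lra.
Qed.

Lemma affine_piece_cont n y eps : eps > 0 -> exists delta, delta > 0 /\
  forall z, Rabs (z - y) < delta -> Rabs (affine_piece n z - affine_piece n y) < eps.
Proof.
  intro Heps. pose proof (moves_right_tau_pos e He Pe). pose proof fundamental_gap.
  set (c := tau e / (e midpoint - midpoint)).
  assert (Hc : 0 < c) by (apply Rdiv_lt_0_compat; lra).
  destruct (continuity_eps _ (G_cont (zpow e (- n)) ltac:(auto)) y (eps / c)) as [d [Hd Hcont]].
  { apply Rdiv_lt_0_compat; lra. }
  exists d. split; auto. intros z Hz. specialize (Hcont z Hz).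
  replace (affine_piece n z - affine_piece n y) with (c * (zpow e (- n) z - zpow e (- n) y))
    by (unfold affine_piece, c; field; lra).
  rewrite Rabs_mult, Rabs_right by lra.
  apply (Rmult_lt_compat_l c) in Hcont; auto. replace (c * (eps / c)) with eps in Hcont
    by (field; lra). lra.
Qed.

Lemma affine_piece_break n :
  affine_piece (n - 1) (zpow e n midpoint) = affine_piece n (zpow e n midpoint).
Proof.
  pose proof fundamental_gap. unfold affine_piece. rewrite <- !zpow_add by auto.
  replace (- (n - 1) + n)%Z with 1%Z by lia. replace (- n + n)%Z with 0%Z by lia.
  change (zpow e 1 midpoint) with (e midpoint). change (zpow e 0 midpoint) with midpoint.
  rewrite minus_IZR. field. lra.
Qed.

Lemma phi_cyclic_mono y y' : a < y < b -> a < y' < b -> y <= y' -> phi_cyclic y <= phi_cyclic y'.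
Proof.
  intros Iy Iy' Hyy'.
  pose proof (power_index_spec y Iy) as By. pose proof (power_index_spec y' Iy') as By'.
  pose proof (moves_right_tau_pos e He Pe). pose proof fundamental_gap.
  pose proof (between_powers_fraction _ _ By). pose proof (between_powers_fraction _ _ By').
  unfold phi_cyclic, affine_piece. set (n := power_index y) in *. set (n' := power_index y') in *.
  assert (Hnn' : (n <= n')%Z).
  { apply Z.nlt_ge. intro Hlt. destruct By as [A B]. destruct By' as [C D].
    pose proof (zpow_le e (n' + 1) n midpoint He Pe ltac:(lia) midpoint_inside). lra. }
  apply Rmult_le_compat_l; [lra|].
  destruct (Z.eq_dec n n') as [<-|Hne].
  - apply Rplus_le_compat_l. unfold Rdiv.
    apply Rmult_le_compat_r; [left; apply Rinv_0_lt_compat; lra|].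
    apply Rplus_le_compat_r, G_le; auto.
  - assert (IZR n + 1 <= IZR n') by (rewrite <- plus_IZR; apply IZR_le; lia). lra.
Qed.

Lemma phi_cyclic_equiv g y : Gab g -> fixed_by_kernel y -> phi_cyclic (g y) = phi_cyclic y + tau g.
Proof.
  intros Hg Fy. destruct (fixed_by_kernel_act g y Hg Fy) as [m [-> ->]].
  pose proof (proj1 Fy) as Iy. pose proof (power_index_spec y Iy) as [A B].
  assert (E : power_index (zpow e m y) = (power_index y + m)%Z).
  { apply power_index_eq; [apply stab_inside; auto|]. split.
    - rewrite Z.add_comm, zpow_add, G_le by auto. auto.
    - replace (power_index y + m + 1)%Z with (m + (power_index y + 1))%Z by lia.
      rewrite zpow_add, G_lt by auto. auto. }
  unfold phi_cyclic, affine_piece. rewrite E, <- zpow_add by auto.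
  replace (- (power_index y + m) + m)%Z with (- power_index y)%Z by lia.
  rewrite plus_IZR. ring.
Qed.

Lemma phi_cyclic_on_piece n z : between_powers n z -> phi_cyclic z = affine_piece n z.
Proof.
  intros Hz. unfold phi_cyclic. rewrite (power_index_eq z n); auto. destruct Hz.
  pose proof (stab_inside (zpow e n) midpoint ltac:(auto) midpoint_inside).
  pose proof (stab_inside (zpow e (n + 1)) midpoint ltac:(auto) midpoint_inside). lra.
Qed.

Lemma phi_cyclic_cont y eps : a < y < b -> eps > 0 -> exists delta, delta > 0 /\
  forall y', a < y' < b -> Rabs (y' - y) < delta -> Rabs (phi_cyclic y' - phi_cyclic y) < eps.
Proof.
  intros Iy Heps. pose proof (power_index_spec y Iy) as [A B]. set (n := power_index y) in *.
  assert (Hglued : forall eps, eps > 0 -> exists delta, delta > 0 /\ forall z,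
    Rabs (z - y) < delta -> Rabs (phi_cyclic z - phi_cyclic y) < eps).
  { destruct (Req_dec (zpow e n midpoint) y) as [Ebr|Ne].
    - assert (zpow e (n - 1) midpoint < y) by (rewrite <- Ebr; apply zpow_lt_on; auto; lia).
      pose proof (Rmin_l (y - zpow e (n - 1) midpoint) (zpow e (n + 1) midpoint - y)).
      pose proof (Rmin_r (y - zpow e (n - 1) midpoint) (zpow e (n + 1) midpoint - y)).
      apply (continuous_glue _ (affine_piece (n - 1)) (affine_piece n) y
               (Rmin (y - zpow e (n - 1) midpoint) (zpow e (n + 1) midpoint - y)));
        try (intro; apply affine_piece_cont).
      + apply Rmin_pos; lra.
      + rewrite <- Ebr. apply affine_piece_break.
      + intros z Hz. apply phi_cyclic_on_piece. unfold between_powers.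
        replace (n - 1 + 1)%Z with n by lia. lra.
      + intros z Hz. apply phi_cyclic_on_piece. split; lra.
    - pose proof (Rmin_l (y - zpow e n midpoint) (zpow e (n + 1) midpoint - y)).
      pose proof (Rmin_r (y - zpow e n midpoint) (zpow e (n + 1) midpoint - y)).
      apply (continuous_glue _ (affine_piece n) (affine_piece n) y
               (Rmin (y - zpow e n midpoint) (zpow e (n + 1) midpoint - y)));
        try (intro; apply affine_piece_cont); auto.
      + apply Rmin_pos; lra.
      + intros z Hz. apply phi_cyclic_on_piece. split; lra.
      + intros z Hz. apply phi_cyclic_on_piece. split; lra. }
  destruct (Hglued eps Heps) as [d [Hd Hd']]. exists d. split; auto.
Qed.

Lemma cyclic_Lambda_properties :
  (exists x, Lambda G a b x) /\ rel_closed a b (Lambda G a b) /\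
  semi_conjugated Gab (Lambda G a b) tau /\
  (forall g, Gab g -> tau g = 0 -> forall x, Lambda G a b x -> g x = x).
Proof.
  apply (Lambda_properties fixed_by_kernel phi_cyclic).
  - apply Lambda_eq_fixed_by_kernel.
  - destruct (kernel_orbit_sup midpoint midpoint_inside) as [s [Fs _]]. eauto.
  - apply fixed_by_kernel_closed.
  - apply phi_cyclic_mono.
  - apply phi_cyclic_cont.
  - intros g x Hg Fx. apply phi_cyclic_equiv; auto.
  - intros g x Hg Tg [Ix Fx]. apply Fx; auto. apply tau_zero; auto.
Qed.

End Cyclic.

Lemma Lambda_semi_conjugated :
  (exists x, Lambda G a b x) /\ rel_closed a b (Lambda G a b) /\
  semi_conjugated Gab (Lambda G a b) tau /\
  (forall g, Gab g -> tau g = 0 -> forall x, Lambda G a b x -> g x = x).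
Proof.
  destruct (classic (exists e, least_moving_right e)) as [[e [He [Pe Hleast]]]|Hnoleast].
  - apply (cyclic_Lambda_properties e); auto.
  - apply dense_Lambda_properties; auto.
Qed.

End Holder.

End SuccessivePair.

End HomeoGroup.

Theorem theoremt (G : (R -> R) -> Prop) (a b : R)
  (HG : homeo_group G)
  (Hnl : without_linked_fixed_points G)
  (Hab : succ_fixed G a b) :
  (forall g, G g -> maps_onto_closed g a b \/ disjoint_open g a b) /\
  (exists tau : (R -> R) -> R,
     is_tau G a b tau /\
     (forall tau', is_tau G a b tau' ->
        exists c, c > 0 /\ forall g, stab G a b g -> tau' g = c * tau g) /\
     (exists x, Lambda G a b x) /\
     rel_closed a b (Lambda G a b) /\
     semi_conjugated (stab G a b) (Lambda G a b) tau /\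
     (forall g, stab G a b g -> tau g = 0 -> forall x, Lambda G a b x -> g x = x)).
Proof.
  split; [exact (maps_onto_or_disjoint G HG a b Hnl Hab)|].
  destruct (exists_moves_right G HG a b Hab) as [f [Hf Pf]].
  pose proof (is_tau_tau G HG a b Hnl Hab f Hf Pf) as Htau.
  exists (tau G a b f). split; [exact Htau|]. split.
  - intros tau' Htau'. exact (is_tau_proportional G HG a b Hab _ tau' Htau Htau').
  - exact (Lambda_semi_conjugated G HG a b Hnl Hab f Hf Pf).
Qed.
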